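(* Let $\mathcal{I}$ be a suitable and well-separated collection of pairwise disjoint intervals in $\mathbb{R}/2\pi\mathbb{Z}$, and let $\alpha:\mathcal{I}\to\{-1,1\}$ be a symmetric colouring with $\hat\varepsilon\in[-1,1]^{S_o}$. Then $|\hat s_\alpha(\theta)|\ge\frac{2K\sqrt{n}}{3}$ for every $\theta\in\bigcup_{I\in\mathcal{I}}I$, and $|\hat s_\alpha(\theta)|\le5K\sqrt{n}$ for every $\theta\in\mathbb{R}$.
   Context: Standing setup: $n$ is a sufficiently large positive integer, $t$ is an odd integer such that $\gamma:=(2^{t+11}+2^t-1)/n$ satisfies $2^{-43}<\gamma\le2^{-40}$. A collection $\mathcal{I}$ of pairwise disjoint intervals in $\mathbb{R}/2\pi\mathbb{Z}$ is suitable if (a) endpoints of each interval lie in $\frac{\pi}{n}\mathbb{Z}$; (b) $\mathcal{I}$ is invariant under $\theta\mapsto\pi+\theta$ and $\theta\mapsto\pi-\theta$; (c) $|\mathcal{I}|=4N$ for some integer $N\le\gamma n$. It is well-separated if moreover (d) $|I|\le6\pi/n$ for each $I\in\mathcal{I}$; (e) $d(I,J)\ge\pi/n$ for distinct $I,J\in\mathcal{I}$ (distance mod $2\pi$, infimum over points); (f) $\bigcup_{I\in\mathcal{I}}I$ is disjoint from $(\pi/2)\mathbb{Z}+[-100\pi/n,100\pi/n]$. A colouring $\alpha:\mathcal{I}\to\{-1,1\}$ is symmetric if $\alpha(I')=\alpha(I)$ whenever $I'=\pi-I$ and $\alpha(I')=-\alpha(I)$ whenever $I'=\pi+I$. Let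 $S_o:=\{1,3,\dots,2n-1\}$, $K:=2^7$, $g_\alpha(\theta):=\sum_{I\in\mathcal{I}}\alpha(I)\mathbf{1}[\theta\in I]$, $\hat\varepsilon_j:=K\sqrt{n}\int_{-\pi}^{\pi}g_\alpha(\theta)\sin(j\theta)\,d\theta$ for $j\in S_o$, and $\hat s_\alpha(\theta):=\sum_{j\in S_o}\hat\varepsilon_j\sin(j\theta)$. *)

From Stdlib Require Import Reals Lra Lia ZArith ClassicalDescription.
From Coquelicot Require Import Coquelicot.
Open Scope R_scope.

Fixpoint rsum (f : nat -> R) (m : nat) : R :=
  match m with O => 0 | S m' => rsum f m' + f m' end.

Definition ind (P : Prop) : R :=
  if excluded_middle_informative P then 1 else 0.

(* The closed arc [a*pi/n, b*pi/n] of R/2piZ, viewed as a 2pi-periodic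
   subset of R (endpoints are in (pi/n)Z by construction). *)
Definition arc (n : nat) (a b : Z) (th : R) : Prop :=
  exists k : Z, IZR a * PI / INR n <= th + 2 * PI * IZR k <= IZR b * PI / INR n.

(* A collection of m intervals, the i-th (i < m) being arc n (lo i) (hi i). *)
Definition Ival (n : nat) (lo hi : nat -> Z) (i : nat) (th : R) : Prop :=
  arc n (lo i) (hi i) th.

Definition K : R := 2 ^ 7.

Definition gamma (n : nat) (t : Z) : R :=
  (powerRZ 2 (t + 11) + powerRZ 2 t - 1) / INR n.

Definition suitable (n : nat) (t : Z) (m : nat) (lo hi : nat -> Z) : Prop :=
  (* genuine (nondegenerate, proper) arcs with endpoints in (pi/n)Z *)
  (forall i, (i < m)%nat -> (lo i < hi i)%Z /\ (hi i - lo i < 2 * Z.of_nat n)%Z) /\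
  (forall i j, (i < m)%nat -> (j < m)%nat -> i <> j ->
     forall th, ~ (Ival n lo hi i th /\ Ival n lo hi j th)) /\
  (forall i, (i < m)%nat -> exists j, (j < m)%nat /\
     forall th, Ival n lo hi j th <-> Ival n lo hi i (th - PI)) /\
  (forall i, (i < m)%nat -> exists j, (j < m)%nat /\
     forall th, Ival n lo hi j th <-> Ival n lo hi i (PI - th)) /\
  (exists N : nat, m = (4 * N)%nat /\ INR N <= gamma n t * INR n).

Definition well_separated (n : nat) (t : Z) (m : nat) (lo hi : nat -> Z) : Prop :=
  suitable n t m lo hi /\
  (forall i, (i < m)%nat -> IZR (hi i - lo i) * PI / INR n <= 6 * PI / INR n) /\
  (forall i j, (i < m)%nat -> (j < m)%nat -> i <> j ->
     forall x y, Ival n lo hi i x -> Ival n lo hi j y ->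
     forall k : Z, PI / INR n <= Rabs (x - y + 2 * PI * IZR k)) /\
  (forall i, (i < m)%nat -> forall th, Ival n lo hi i th ->
     forall k : Z, ~ (Rabs (th - IZR k * PI / 2) <= 100 * PI / INR n)).

Definition colouring (m : nat) (alpha : nat -> R) : Prop :=
  forall i, (i < m)%nat -> alpha i = 1 \/ alpha i = -1.

Definition symmetric_colouring (n m : nat) (lo hi : nat -> Z) (alpha : nat -> R) : Prop :=
  colouring m alpha /\
  (forall i j, (i < m)%nat -> (j < m)%nat ->
     (forall th, Ival n lo hi j th <-> Ival n lo hi i (PI - th)) -> alpha j = alpha i) /\
  (forall i j, (i < m)%nat -> (j < m)%nat ->
     (forall th, Ival n lo hi j th <-> Ival n lo hi i (th - PI)) -> alpha j = - alpha i).

Definition g_alpha (n m : nat) (lo hi : nat -> Z) (alpha : nat -> R) (th : R) : R :=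
  rsum (fun i => alpha i * ind (Ival n lo hi i th)) m.

Definition eps_hat (n m : nat) (lo hi : nat -> Z) (alpha : nat -> R) (j : nat) : R :=
  K * sqrt (INR n) *
  RInt (fun th => g_alpha n m lo hi alpha th * sin (INR j * th)) (- PI) PI.

(* S_o = {1,3,...,2n-1}, enumerated as j = 2l+1, l < n. *)
Definition s_hat (n m : nat) (lo hi : nat -> Z) (alpha : nat -> R) (th : R) : R :=
  rsum (fun l => eps_hat n m lo hi alpha (2 * l + 1) * sin (INR (2 * l + 1) * th)) n.

From Stdlib Require Import Reals ZArith Lra Lia Machin ClassicalDescription IndefiniteDescription.
From Coquelicot Require Import Coquelicot.
Open Scope R_scope.

(* Writing out [eps_hat], the sine sums collapse into a convolution of the colouring g
   with the kernel k(x) = sum_(l<n) 2 cos((2l+1)x) = sin(2nx)/sin x; as g is odd,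
   s_hat(th) = (K sqrt n / 2) int_(-pi)^pi g(phi) k(th - phi) dphi.  Both g and k change
   sign under a shift by pi, so the integral may be taken over any window
   [q pi/2, q pi/2 + pi]; we take one with th well inside it.  Then s_hat(th) / (K sqrt n)
   is a signed sum of the integrals of k over the translates th - I, which lie in
   (-3pi/4, 3pi/4).
   A translate at distance at least pi/n from 0 has endpoints at which cos(2nx) agrees, so
   integrating by parts bounds its integral by (1/n) int 1/sin^2; over all these disjoint
   translates this adds up to at most 2/(n sin(pi/n)), about 2/pi.  Of the other translates,
   by separation either one contains 0 or at most one lies on each side of 0.  The
   primitive of k from 0 stays in [0, 1.94] on [0, pi/2] (its maximum is about Si(pi)) and
   exceeds 1.36 beyond pi/(2n) (about Si(2pi)), so they contribute at most 3.88 in absolute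
   value, and a translate containing 0 -- as th - I does when th is in I -- contributes at
   least 1.36.  Hence |s_hat| <= (3.88 + 0.64) K sqrt n everywhere, and
   |s_hat| >= (1.36 - 0.64) K sqrt n on the intervals. *)

Lemma ind_true (P : Prop) : P -> ind P = 1.
Proof. intros HP; unfold ind; destruct (excluded_middle_informative P); tauto. Qed.

Lemma ind_false (P : Prop) : ~ P -> ind P = 0.
Proof. intros HP; unfold ind; destruct (excluded_middle_informative P); tauto. Qed.

Lemma rsum_ext f g m : (forall i, (i < m)%nat -> f i = g i) -> rsum f m = rsum g m.
Proof. induction m as [|m IH]; intros H; simpl; auto. rewrite IH, H; auto. Qed.

Lemma rsum_plus f g m : rsum (fun i => f i + g i) m = rsum f m + rsum g m.
Proof. induction m as [|m IH]; simpl; [ring|]. rewrite IH; ring. Qed.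

Lemma rsum_scal c f m : rsum (fun i => c * f i) m = c * rsum f m.
Proof. induction m as [|m IH]; simpl; [ring|]. rewrite IH; ring. Qed.

Lemma rsum_mult_r f c m : rsum f m * c = rsum (fun i => f i * c) m.
Proof. induction m as [|m IH]; simpl; [ring|]. rewrite <- IH; ring. Qed.

Lemma rsum_le f g m : (forall i, (i < m)%nat -> f i <= g i) -> rsum f m <= rsum g m.
Proof. induction m as [|m IH]; intros H; simpl; [lra|]. apply Rplus_le_compat; auto. Qed.

Lemma rsum_abs f m : Rabs (rsum f m) <= rsum (fun i => Rabs (f i)) m.
Proof.
  induction m as [|m IH]; simpl; [rewrite Rabs_R0; lra|].
  eapply Rle_trans; [apply Rabs_triang | lra].
Qed.

Lemma rsum_zero f m : (forall i, (i < m)%nat -> f i = 0) -> rsum f m = 0.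
Proof. induction m as [|m IH]; intros H; simpl; auto. rewrite IH, H; auto; ring. Qed.

Lemma rsum_single f m i0 : (i0 < m)%nat ->
  (forall i, (i < m)%nat -> i <> i0 -> f i = 0) -> rsum f m = f i0.
Proof.
  induction m as [|m IH]; intros Hi H; [lia|]. simpl.
  destruct (Nat.eq_dec i0 m) as [->|Hne].
  - rewrite rsum_zero; [ring|]. intros; apply H; lia.
  - rewrite IH, (H m) by (try lia; intros; apply H; lia). ring.
Qed.

Lemma rsum_le_of_unique (Q : nat -> Prop) b m M : 0 <= M ->
  (forall i j, (i < m)%nat -> (j < m)%nat -> Q i -> Q j -> i = j) ->
  (forall i, (i < m)%nat -> ~ Q i -> b i = 0) ->
  (forall i, (i < m)%nat -> Q i -> b i <= M) ->
  rsum b m <= M.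
Proof.
  induction m as [|m IH]; intros HM Hu H0 H1; simpl; [lra|].
  destruct (classic (Q m)) as [Qm|Qm].
  - rewrite rsum_zero.
    + assert (b m <= M) by auto. lra.
    + intros i Hi. apply H0; [lia|]. intros Qi.
      assert (i = m) by (apply Hu; auto; lia). lia.
  - rewrite (H0 m), Rplus_0_r by auto. apply IH; auto.
Qed.

(* Coquelicot's lemmas for real-valued integrands, restated with [+] and [*] of [R] so that
   they can be used for rewriting. *)
Lemma RInt_extR (f g : R -> R) a b :
  (forall x, Rmin a b < x < Rmax a b -> f x = g x) -> RInt f a b = RInt g a b.
Proof. exact (RInt_ext f g a b). Qed.

Lemma ex_RInt_extR (f g : R -> R) a b :
  (forall x, Rmin a b < x < Rmax a b -> f x = g x) -> ex_RInt f a b -> ex_RInt g a b.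
Proof. exact (ex_RInt_ext f g a b). Qed.

Lemma RInt_plusR (f g : R -> R) a b : ex_RInt f a b -> ex_RInt g a b ->
  RInt (fun x => f x + g x) a b = RInt f a b + RInt g a b.
Proof. exact (RInt_plus f g a b). Qed.

Lemma RInt_minusR (f g : R -> R) a b : ex_RInt f a b -> ex_RInt g a b ->
  RInt (fun x => f x - g x) a b = RInt f a b - RInt g a b.
Proof. exact (RInt_minus f g a b). Qed.

Lemma RInt_scalR (f : R -> R) c a b : ex_RInt f a b ->
  RInt (fun x => c * f x) a b = c * RInt f a b.
Proof. exact (RInt_scal f a b c). Qed.

Lemma RInt_ChaslesR (f : R -> R) a b c : ex_RInt f a b -> ex_RInt f b c ->
  RInt f a b + RInt f b c = RInt f a c.
Proof. exact (RInt_Chasles f a b c). Qed.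

Lemma RInt_constR (c a b : R) : RInt (fun _ => c) a b = (b - a) * c.
Proof. exact (RInt_const a b c). Qed.

Lemma RInt_shift (f : R -> R) v a b : ex_RInt f (a + v) (b + v) ->
  RInt (fun y => f (y + v)) a b = RInt f (a + v) (b + v).
Proof.
  intros H. rewrite <- (Rmult_1_l a) at 2. rewrite <- (Rmult_1_l b) at 2.
  rewrite <- (RInt_comp_lin f 1 v a b) by (now rewrite !Rmult_1_l).
  apply RInt_ext; intros. now rewrite !Rmult_1_l.
Qed.

Lemma ex_RInt_shift (f : R -> R) v a b : ex_RInt f (a + v) (b + v) ->
  ex_RInt (fun y => f (y + v)) a b.
Proof.
  intros H. apply (ex_RInt_extR (fun y => 1 * f (1 * y + v))).
  - intros. now rewrite !Rmult_1_l.
  - apply (ex_RInt_comp_lin f 1 v a b). now rewrite !Rmult_1_l.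
Qed.

Lemma ex_RInt_reflect (f : R -> R) v a b : ex_RInt f (v - a) (v - b) ->
  ex_RInt (fun y => f (v - y)) a b.
Proof.
  intros H. apply (ex_RInt_extR (fun y => -1 * (-1 * f (-1 * y + v)))).
  - intros x _. replace (-1 * x + v) with (v - x) by ring. ring.
  - apply (ex_RInt_scal (fun y => -1 * f (-1 * y + v))), (ex_RInt_comp_lin f (-1) v a b).
    now replace (-1 * a + v) with (v - a) by ring; replace (-1 * b + v) with (v - b) by ring.
Qed.

Lemma RInt_reflect (f : R -> R) v a b : ex_RInt f (v - a) (v - b) ->
  RInt (fun y => f (v - y)) a b = RInt f (v - b) (v - a).
Proof.
  intros H.
  assert (Hl : ex_RInt f (-1 * a + v) (-1 * b + v))
    by now replace (-1 * a + v) with (v - a) by ring; replace (-1 * b + v) with (v - b) by ring.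
  pose proof (RInt_comp_lin f (-1) v a b Hl) as E.
  rewrite (RInt_ext _ (fun y => -1 * f (v - y))), RInt_scalR in E.
  - replace (-1 * a + v) with (v - a) in E by ring. replace (-1 * b + v) with (v - b) in E by ring.
    rewrite <- (opp_RInt_swap f _ _ H), <- E.
    apply Rminus_diag_uniq. change (opp ?x) with (- x). ring.
  - now apply ex_RInt_reflect.
  - intros x _. change (-1 * f (-1 * x + v) = -1 * f (v - x)).
    now replace (-1 * x + v) with (v - x) by ring.
Qed.

Lemma RInt_nonneg (f : R -> R) a b : a <= b -> ex_RInt f a b ->
  (forall x, a < x < b -> 0 <= f x) -> 0 <= RInt f a b.
Proof.
  intros. replace 0 with (RInt (fun _ => 0) a b) by (rewrite RInt_constR; apply Rmult_0_r).
  apply RInt_le; auto. apply ex_RInt_const.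
Qed.

Lemma RInt_nonpos (f : R -> R) a b : a <= b -> ex_RInt f a b ->
  (forall x, a < x < b -> f x <= 0) -> RInt f a b <= 0.
Proof.
  intros. replace 0 with (RInt (fun _ => 0) a b) by (rewrite RInt_constR; apply Rmult_0_r).
  apply RInt_le; auto. apply ex_RInt_const.
Qed.

Lemma abs_RInt_le_RInt (f g : R -> R) a b : a <= b -> ex_RInt f a b -> ex_RInt g a b ->
  (forall x, a < x < b -> Rabs (f x) <= g x) -> Rabs (RInt f a b) <= RInt g a b.
Proof.
  intros Hab Hf Hg H. apply Rabs_le; split.
  - assert (Hlow : RInt (fun x => -1 * g x) a b <= RInt f a b).
    { apply RInt_le; auto.
      - now apply (ex_RInt_scal g).
      - intros x Hx; specialize (H x Hx). apply Rabs_le_between in H. lra. }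
    rewrite RInt_scalR in Hlow by exact Hg. lra.
  - apply RInt_le; auto. intros x Hx; specialize (H x Hx). apply Rabs_le_between in H. lra.
Qed.

Lemma continuous_of_ex_derive (f : R -> R) x : ex_derive f x -> continuous f x.
Proof. exact (@ex_derive_continuous R_AbsRing R_NormedModule f x). Qed.

Lemma ex_RInt_continuous_on (f : R -> R) a b : a <= b ->
  (forall x, a <= x <= b -> continuous f x) -> ex_RInt f a b.
Proof.
  intros Hab Hf. apply (@ex_RInt_continuous R_CompleteNormedModule). intros x Hx.
  rewrite Rmin_left, Rmax_right in Hx by auto. auto.
Qed.

Lemma RInt_antiderivative (F f : R -> R) a b : a <= b ->
  (forall x, a <= x <= b -> is_derive F x (f x)) ->
  (forall x, a <= x <= b -> continuous f x) ->
  RInt f a b = F b - F a /\ ex_RInt f a b.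
Proof.
  intros Hab Hd Hc.
  assert (H : @is_RInt R_CompleteNormedModule f a b (minus (F b) (F a))).
  { apply (@is_RInt_derive R_CompleteNormedModule); intros x Hx;
      rewrite Rmin_left, Rmax_right in Hx by auto; auto. }
  split; [now apply (@is_RInt_unique R_CompleteNormedModule) | now exists (minus (F b) (F a))].
Qed.

Lemma RInt_rsum (F : nat -> R -> R) m a b : (forall i, (i < m)%nat -> ex_RInt (F i) a b) ->
  ex_RInt (fun x => rsum (fun i => F i x) m) a b /\
  RInt (fun x => rsum (fun i => F i x) m) a b = rsum (fun i => RInt (F i) a b) m.
Proof.
  induction m as [|m IH]; intros H; simpl.
  - split; [apply ex_RInt_const | rewrite RInt_constR; ring].
  - destruct IH as [X E]; [intros; apply H; lia|].
    assert (Xm : ex_RInt (F m) a b) by (apply H; lia).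
    split; [apply (ex_RInt_plus (fun x => rsum (fun i => F i x) m) (F m)); auto|].
    now rewrite (RInt_plusR (fun x => rsum (fun i => F i x) m) (F m)), E.
Qed.

Lemma RInt_periodic_window (f : R -> R) (s : R) :
  (forall x, f (x + 2 * s) = f x) ->
  (forall q : Z, ex_RInt f (IZR q * s) (IZR q * s + s)) ->
  forall q : Z, RInt f (IZR q * s) (IZR q * s + 2 * s) = RInt f 0 (2 * s).
Proof.
  intros Hper Hint.
  set (Qf := fun q : Z => RInt f (IZR q * s) (IZR q * s + s)).
  assert (Hsucc : forall q : Z, IZR (q + 1) * s = IZR q * s + s)
    by (intros; rewrite plus_IZR; simpl; ring).
  assert (Hsplit : forall q : Z, RInt f (IZR q * s) (IZR q * s + 2 * s) = Qf q + Qf (q + 1)%Z).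
  { intros q. unfold Qf. rewrite Hsucc.
    replace (IZR q * s + s + s) with (IZR q * s + 2 * s) by ring.
    rewrite RInt_ChaslesR; auto.
    replace (IZR q * s + s) with (IZR (q + 1) * s) by apply Hsucc.
    replace (IZR q * s + 2 * s) with (IZR (q + 1) * s + s) by (rewrite Hsucc; ring). apply Hint. }
  assert (H2 : forall q : Z, Qf (q + 2)%Z = Qf q).
  { intros q. unfold Qf.
    replace (IZR (q + 2) * s) with (IZR q * s + 2 * s) by (rewrite plus_IZR; simpl; ring).
    replace (IZR q * s + 2 * s + s) with (IZR q * s + s + 2 * s) by ring.
    rewrite <- RInt_shift; [apply RInt_extR; intros; apply Hper|].
    replace (IZR q * s + 2 * s) with (IZR (q + 2) * s) by (rewrite plus_IZR; simpl; ring).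
    replace (IZR q * s + s + 2 * s) with (IZR (q + 2) * s + s) by (rewrite plus_IZR; simpl; ring).
    apply Hint. }
  assert (Hconst : forall q : Z, Qf q + Qf (q + 1)%Z = Qf 0%Z + Qf 1%Z).
  { intros q. induction q as [|q IH|q IH] using Z.peano_ind; [reflexivity| |]; rewrite <- IH.
    - replace (Z.succ q + 1)%Z with (q + 2)%Z by lia. rewrite H2. unfold Z.succ. ring.
    - replace (q + 1)%Z with (Z.pred q + 2)%Z by lia. rewrite H2.
      replace (Z.pred q + 1)%Z with q by lia. ring. }
  intros q. rewrite Hsplit, Hconst.
  pose proof (Hsplit 0%Z) as E0. rewrite Rmult_0_l, Rplus_0_l in E0. now rewrite E0.
Qed.

Lemma PI_bounds : 3.1415 < PI < 3.1416.
Proof.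
  destruct (PI_2_3_7_ineq 3) as [H1 H2].
  unfold tg_alt, PI_2_3_7_tg, Ratan_seq in H1, H2.
  simpl sum_f_R0 in H1, H2. simpl INR in H1, H2. simpl pow in H1, H2.
  split; lra.
Qed.

Lemma inv_PI_bounds : 0.3183 <= / PI <= 0.31832.
Proof.
  pose proof PI_bounds. assert (PI * / PI = 1) by (apply Rinv_r; lra).
  split; nra.
Qed.

Lemma RInt_ind_out (P : R -> Prop) (f : R -> R) u v : u <= v ->
  (forall x, u < x < v -> ~ P x) ->
  ex_RInt (fun x => ind (P x) * f x) u v /\ RInt (fun x => ind (P x) * f x) u v = 0.
Proof.
  intros Huv HP.
  assert (E : forall x, Rmin u v < x < Rmax u v -> 0 = ind (P x) * f x).
  { intros x Hx. rewrite Rmin_left, Rmax_right in Hx by lra.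
    rewrite ind_false; [ring|]. apply HP; lra. }
  split; [apply (ex_RInt_extR (fun _ => 0)); auto; apply ex_RInt_const|].
  rewrite <- (RInt_extR (fun _ => 0)) by auto. rewrite RInt_constR. apply Rmult_0_r.
Qed.

Lemma RInt_ind_interval (P : R -> Prop) (f : R -> R) u v c d : u <= c -> c <= d -> d <= v ->
  (forall x, u <= x <= v -> (P x <-> c <= x <= d)) ->
  (forall x, c <= x <= d -> continuous f x) ->
  ex_RInt (fun x => ind (P x) * f x) u v /\ RInt (fun x => ind (P x) * f x) u v = RInt f c d.
Proof.
  intros Huc Hcd Hdv HP Hf.
  set (h := fun x => ind (P x) * f x).
  destruct (RInt_ind_out P f u c) as [X1 R1]; [lra | intros x Hx; rewrite HP; lra|].
  destruct (RInt_ind_out P f d v) as [X3 R3]; [lra | intros x Hx; rewrite HP; lra|].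
  fold h in X1, R1, X3, R3.
  assert (Ef : forall x, Rmin c d < x < Rmax c d -> f x = h x).
  { intros x Hx. rewrite Rmin_left, Rmax_right in Hx by lra.
    unfold h. rewrite ind_true; [ring|]. rewrite HP; lra. }
  assert (Xf : ex_RInt f c d) by (apply ex_RInt_continuous_on; auto).
  assert (X2 : ex_RInt h c d) by (apply (ex_RInt_extR f); auto).
  assert (X12 : ex_RInt h u d) by (apply (ex_RInt_Chasles _ _ c); auto).
  split; [apply (ex_RInt_Chasles _ _ d); auto|].
  rewrite <- (RInt_ChaslesR h u d v), <- (RInt_ChaslesR h u c d), (RInt_extR f h c d Ef) by auto.
  lra.
Qed.

Lemma rsum_RInt_disjoint_le (Q : nat -> Prop) (A B : nat -> R) (h : R -> R) m u v : u <= v ->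
  (forall x, u <= x <= v -> 0 <= h x) -> (forall x, u <= x <= v -> continuous h x) ->
  (forall i, (i < m)%nat -> Q i -> u <= A i /\ A i <= B i /\ B i <= v) ->
  (forall i j x, (i < m)%nat -> (j < m)%nat -> i <> j -> Q i -> Q j ->
     A i <= x <= B i -> A j <= x <= B j -> False) ->
  rsum (fun i => ind (Q i) * RInt h (A i) (B i)) m <= RInt h u v.
Proof.
  intros Huv Hpos Hcont Hin Hdisj.
  set (F := fun i x => ind (Q i /\ A i <= x <= B i) * h x).
  assert (HF : forall i, (i < m)%nat ->
             ex_RInt (F i) u v /\ RInt (F i) u v = ind (Q i) * RInt h (A i) (B i)).
  { intros i Hi. destruct (classic (Q i)) as [Qi|Qi].
    - destruct (Hin i Hi Qi) as (Hu & Hab & Hv).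
      rewrite ind_true, Rmult_1_l by exact Qi.
      apply RInt_ind_interval; auto; [|intros; apply Hcont; lra].
      intros x _. tauto.
    - rewrite ind_false, Rmult_0_l by exact Qi. apply RInt_ind_out; auto. intros x _. tauto. }
  destruct (RInt_rsum F m u v) as [X E]; [intros; now apply HF|].
  rewrite <- (rsum_ext (fun i => RInt (F i) u v)) by (intros; now apply HF).
  rewrite <- E. apply RInt_le; auto; [apply ex_RInt_continuous_on; auto|].
  intros x Hx. apply (rsum_le_of_unique (fun i => Q i /\ A i <= x <= B i)).
  - apply Hpos; lra.
  - intros i j Hi Hj [Qi Ii] [Qj Ij]. destruct (Nat.eq_dec i j) as [|Hne]; auto.
    exfalso. now apply (Hdisj i j x).
  - intros i _ Hn. unfold F. rewrite ind_false by exact Hn. ring.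
  - intros i _ Hq. unfold F. rewrite ind_true by exact Hq. lra.
Qed.

(** * The kernel [sin (2 n x) / sin x] *)

Definition kernel (n : nat) (x : R) : R := rsum (fun l => 2 * cos (INR (2 * l + 1) * x)) n.

Lemma kernel_continuous n x : continuous (kernel n) x.
Proof.
  induction n as [|n IH].
  - apply continuous_const.
  - change (continuous (fun y => kernel n y + 2 * cos (INR (2 * n + 1) * y)) x).
    apply (continuous_plus (kernel n)); [exact IH|].
    apply continuous_of_ex_derive. auto_derive. auto.
Qed.

Lemma ex_RInt_kernel n a b : ex_RInt (kernel n) a b.
Proof.
  destruct (Rle_dec a b).
  - apply ex_RInt_continuous_on; auto. intros; apply kernel_continuous.
  - apply ex_RInt_swap, ex_RInt_continuous_on; [lra|]. intros; apply kernel_continuous.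
Qed.

Lemma INR_odd (l : nat) : INR (2 * l + 1) = 2 * INR l + 1.
Proof. rewrite plus_INR, mult_INR. simpl. ring. Qed.

Lemma sin_mul_kernel n x : sin x * kernel n x = sin (2 * INR n * x).
Proof.
  induction n as [|n IH].
  - change (sin x * 0 = sin (2 * INR 0 * x)).
    replace (2 * INR 0 * x) with 0 by (simpl; ring). rewrite sin_0. ring.
  - change (sin x * (kernel n x + 2 * cos (INR (2 * n + 1) * x)) = sin (2 * INR (S n) * x)).
    rewrite Rmult_plus_distr_l, IH, INR_odd, S_INR.
    replace (2 * (INR n + 1) * x) with ((2 * INR n + 1) * x + x) by ring.
    replace (2 * INR n * x) with ((2 * INR n + 1) * x - x) at 1 by ring.
    rewrite sin_plus, sin_minus. ring.
Qed.

Lemma kernel_eq n x : sin x <> 0 -> kernel n x = sin (2 * INR n * x) / sin x.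
Proof. intros. rewrite <- sin_mul_kernel. field. auto. Qed.

Lemma kernel_even n x : kernel n (- x) = kernel n x.
Proof.
  induction n as [|n IH]; [reflexivity|].
  change (kernel n (- x) + 2 * cos (INR (2 * n + 1) * - x)
          = kernel n x + 2 * cos (INR (2 * n + 1) * x)).
  rewrite IH, <- cos_neg. f_equal. f_equal. f_equal. ring.
Qed.

Lemma kernel_antiperiodic n x : kernel n (x + PI) = - kernel n x.
Proof.
  induction n as [|n IH]; [change (0 = - 0); ring|].
  change (kernel n (x + PI) + 2 * cos (INR (2 * n + 1) * (x + PI))
          = - (kernel n x + 2 * cos (INR (2 * n + 1) * x))).
  rewrite IH, INR_odd.
  replace ((2 * INR n + 1) * (x + PI)) with ((2 * INR n + 1) * x + PI + 2 * INR n * PI) by ring.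
  rewrite cos_period, neg_cos. ring.
Qed.

Lemma rsum_sin_mul_sin k phi th :
  rsum (fun l => sin (INR (2 * l + 1) * phi) * sin (INR (2 * l + 1) * th)) k
  = / 4 * (kernel k (th - phi) - kernel k (th + phi)).
Proof.
  induction k as [|k IH]; [change (0 = / 4 * (0 - 0)); ring|].
  change (rsum (fun l => sin (INR (2 * l + 1) * phi) * sin (INR (2 * l + 1) * th)) k
          + sin (INR (2 * k + 1) * phi) * sin (INR (2 * k + 1) * th)
          = / 4 * ((kernel k (th - phi) + 2 * cos (INR (2 * k + 1) * (th - phi)))
                   - (kernel k (th + phi) + 2 * cos (INR (2 * k + 1) * (th + phi))))).
  rewrite IH.
  replace (INR (2 * k + 1) * (th - phi)) with (INR (2 * k + 1) * th - INR (2 * k + 1) * phi) by ring.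
  replace (INR (2 * k + 1) * (th + phi)) with (INR (2 * k + 1) * th + INR (2 * k + 1) * phi) by ring.
  rewrite cos_minus, cos_plus. field.
Qed.

Lemma RInt_kernel_opp n a b : RInt (kernel n) a b = RInt (kernel n) (- b) (- a).
Proof.
  rewrite <- (Rminus_0_l b), <- (Rminus_0_l a), <- RInt_reflect by apply ex_RInt_kernel.
  apply RInt_ext. intros x _. rewrite Rminus_0_l. symmetry; apply kernel_even.
Qed.

Lemma RInt_inv_sin_sq a b : a <= b -> (forall x, a <= x <= b -> sin x <> 0) ->
  RInt (fun x => / sin x ^ 2) a b = cos a / sin a - cos b / sin b.
Proof.
  intros Hab Hs.
  destruct (RInt_antiderivative (fun x => - (cos x / sin x)) (fun x => / sin x ^ 2) a b Hab) as [E _].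
  - intros x Hx. specialize (Hs x Hx). auto_derive; auto.
    pose proof (sin2_cos2 x) as P. unfold Rsqr in P. field_simplify; auto.
    rewrite <- P. field. auto.
  - intros x Hx. specialize (Hs x Hx). apply continuous_of_ex_derive. auto_derive.
    repeat split; auto using pow_nonzero.
  - rewrite E. lra.
Qed.

Lemma RInt_cos_div_sin_sq a b : a <= b -> (forall x, a <= x <= b -> sin x <> 0) ->
  RInt (fun x => cos x / sin x ^ 2) a b = / sin a - / sin b /\
  ex_RInt (fun x => cos x / sin x ^ 2) a b.
Proof.
  intros Hab Hs.
  destruct (RInt_antiderivative (fun x => - / sin x) (fun x => cos x / sin x ^ 2) a b Hab) as [E X].
  - intros x Hx. specialize (Hs x Hx). auto_derive; auto. field. auto.
  - intros x Hx. specialize (Hs x Hx). apply continuous_of_ex_derive. auto_derive.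
    repeat split; auto using pow_nonzero.
  - split; [rewrite E; lra | exact X].
Qed.

Definition sin_primitive (n : nat) (A x : R) : R := (A - cos (2 * INR n * x)) / (2 * INR n).

Lemma sin_primitive_bounds n x : (0 < n)%nat -> 0 <= sin_primitive n 1 x <= / INR n.
Proof.
  intros Hn. assert (0 < INR n) by (apply lt_0_INR; lia).
  pose proof (COS_bound (2 * INR n * x)). unfold sin_primitive. split.
  - apply Rmult_le_pos; [lra | left; apply Rinv_0_lt_compat; lra].
  - apply Rle_trans with (2 / (2 * INR n)); [|right; field; lra].
    unfold Rdiv. apply Rmult_le_compat_r; [left; apply Rinv_0_lt_compat|]; lra.
Qed.

Lemma RInt_kernel_by_parts n A c d : (0 < n)%nat -> c <= d ->
  (forall x, c <= x <= d -> sin x <> 0) ->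
  RInt (kernel n) c d = sin_primitive n A d / sin d - sin_primitive n A c / sin c
    + RInt (fun x => sin_primitive n A x * cos x / sin x ^ 2) c d
  /\ ex_RInt (fun x => sin_primitive n A x * cos x / sin x ^ 2) c d.
Proof.
  intros Hn Hcd Hs. assert (HN : 0 < INR n) by (apply lt_0_INR; lia).
  set (W := fun x => sin_primitive n A x * cos x / sin x ^ 2).
  set (g := fun y => sin (2 * INR n * y) / sin y - W y).
  assert (HW : ex_RInt W c d).
  { apply ex_RInt_continuous_on; auto. intros x Hx. specialize (Hs x Hx).
    apply continuous_of_ex_derive. unfold W, sin_primitive. auto_derive.
    repeat split; auto using pow_nonzero. }
  destruct (RInt_antiderivative (fun y => sin_primitive n A y / sin y) g c d Hcd) as [E1 E2].
  { intros x Hx. specialize (Hs x Hx). unfold g, W, sin_primitive. auto_derive; auto. field. lra. }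
  { intros x Hx. specialize (Hs x Hx). apply continuous_of_ex_derive. unfold g, W, sin_primitive.
    auto_derive. repeat split; auto using pow_nonzero. }
  split; [|exact HW].
  rewrite (RInt_extR _ (fun y => g y + W y)).
  - rewrite RInt_plusR, E1 by auto. unfold W. lra.
  - intros x Hx. rewrite Rmin_left, Rmax_right in Hx by auto.
    unfold g. rewrite kernel_eq by (apply Hs; lra). ring.
Qed.

Lemma abs_RInt_kernel_le n c d : (0 < n)%nat -> c <= d ->
  (forall x, c <= x <= d -> sin x <> 0) -> cos (2 * INR n * c) = cos (2 * INR n * d) ->
  Rabs (RInt (kernel n) c d) <= / INR n * RInt (fun x => / sin x ^ 2) c d.
Proof.
  intros Hn Hcd Hs Hcos. assert (HN : 0 < INR n) by (apply lt_0_INR; lia).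
  destruct (RInt_kernel_by_parts n (cos (2 * INR n * c)) c d Hn Hcd Hs) as [E HW].
  assert (HI : ex_RInt (fun x => / sin x ^ 2) c d).
  { apply ex_RInt_continuous_on; auto. intros x Hx. specialize (Hs x Hx).
    apply continuous_of_ex_derive. auto_derive. repeat split; auto using pow_nonzero. }
  assert (Hc : sin_primitive n (cos (2 * INR n * c)) c = 0)
    by (unfold sin_primitive; unfold Rdiv; rewrite Rminus_diag; ring).
  assert (Hd : sin_primitive n (cos (2 * INR n * c)) d = 0)
    by (unfold sin_primitive; rewrite Hcos; unfold Rdiv; rewrite Rminus_diag; ring).
  rewrite E, Hc, Hd, <- RInt_scalR by exact HI.
  replace (0 / sin d - 0 / sin c) with 0 by (unfold Rdiv; ring). rewrite Rplus_0_l.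
  apply abs_RInt_le_RInt; auto; [now apply (ex_RInt_scal (fun x => / sin x ^ 2))|].
  intros x Hx. assert (Hsx : 0 < sin x ^ 2) by (apply pow2_gt_0, Hs; lra).
  pose proof (COS_bound (2 * INR n * c)). pose proof (COS_bound (2 * INR n * x)).
  pose proof (COS_bound x).
  assert (Hp : Rabs (sin_primitive n (cos (2 * INR n * c)) x * cos x) <= / INR n).
  { unfold sin_primitive. rewrite Rabs_mult, Rabs_div by lra.
    rewrite (Rabs_pos_eq (2 * INR n)) by lra.
    assert (Rabs (cos (2 * INR n * c) - cos (2 * INR n * x)) <= 2) by (apply Rabs_le; lra).
    assert (Rabs (cos x) <= 1) by (apply Rabs_le; lra).
    apply Rle_trans with (2 / (2 * INR n) * 1); [|right; field; lra].
    assert (0 < / (2 * INR n)) by (apply Rinv_0_lt_compat; lra).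
    unfold Rdiv. apply Rmult_le_compat; auto using Rabs_pos.
    - apply Rmult_le_pos; auto using Rabs_pos; lra.
    - apply Rmult_le_compat_r; lra. }
  unfold Rdiv. rewrite Rabs_mult, (Rabs_pos_eq (/ _)) by (left; apply Rinv_0_lt_compat; lra).
  apply Rmult_le_compat_r; [left; apply Rinv_0_lt_compat; lra | exact Hp].
Qed.

Lemma RInt_kernel_tail n a y : (0 < n)%nat -> 0 < a -> a <= y -> y <= PI / 2 ->
  cos (2 * INR n * a) = 1 -> 0 <= RInt (kernel n) a y <= / INR n * / sin a.
Proof.
  intros Hn Ha Hay Hy Hc. assert (HN : 0 < INR n) by (apply lt_0_INR; lia).
  assert (Hsp : forall x, a <= x <= y -> 0 < sin x) by (intros x Hx; apply sin_gt_0; lra).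
  assert (Hcp : forall x, a <= x <= y -> 0 <= cos x) by (intros x Hx; apply cos_ge_0; lra).
  destruct (RInt_kernel_by_parts n 1 a y Hn Hay) as [E HW];
    [intros x Hx; specialize (Hsp x Hx); lra|].
  assert (Va : sin_primitive n 1 a = 0) by (unfold sin_primitive; rewrite Hc; unfold Rdiv; ring).
  destruct (RInt_cos_div_sin_sq a y Hay) as [E2 H2]; [intros x Hx; specialize (Hsp x Hx); lra|].
  assert (Hsy : 0 < sin y) by (apply Hsp; lra). assert (Hsa : 0 < sin a) by (apply Hsp; lra).
  assert (L1 : 0 <= RInt (fun x => sin_primitive n 1 x * cos x / sin x ^ 2) a y).
  { apply RInt_nonneg; auto. intros x Hx.
    assert (0 < sin x) by (apply Hsp; lra). assert (0 <= cos x) by (apply Hcp; lra).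
    pose proof (sin_primitive_bounds n x Hn).
    unfold Rdiv. apply Rmult_le_pos; [apply Rmult_le_pos; lra|].
    left; apply Rinv_0_lt_compat, pow_lt; auto. }
  assert (L2 : RInt (fun x => sin_primitive n 1 x * cos x / sin x ^ 2) a y
               <= / INR n * (/ sin a - / sin y)).
  { rewrite <- E2, <- RInt_scalR by auto. apply RInt_le; auto.
    - now apply (ex_RInt_scal (fun x => cos x / sin x ^ 2)).
    - intros x Hx. assert (0 < sin x) by (apply Hsp; lra). assert (0 <= cos x) by (apply Hcp; lra).
      pose proof (sin_primitive_bounds n x Hn).
      assert (0 < / sin x ^ 2) by (apply Rinv_0_lt_compat, pow_lt; auto).
      unfold Rdiv. rewrite <- Rmult_assoc. apply Rmult_le_compat_r; [lra|].
      apply Rmult_le_compat_r; lra. }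
  assert (L3 : 0 <= sin_primitive n 1 y / sin y <= / INR n * / sin y).
  { pose proof (sin_primitive_bounds n y Hn).
    assert (0 < / sin y) by (apply Rinv_0_lt_compat; auto).
    unfold Rdiv. split; [apply Rmult_le_pos; lra | apply Rmult_le_compat_r; lra]. }
  rewrite E, Va. unfold Rdiv at 2. rewrite Rmult_0_l. split; [lra|].
  assert (0 < / INR n * / sin y) by (apply Rmult_lt_0_compat; apply Rinv_0_lt_compat; lra).
  lra.
Qed.

Definition kernel_int (n : nat) (y : R) : R := RInt (kernel n) 0 y.

Lemma kernel_int_split n a y : kernel_int n y = kernel_int n a + RInt (kernel n) a y.
Proof. unfold kernel_int. rewrite RInt_ChaslesR; auto; apply ex_RInt_kernel. Qed.

Lemma kernel_nonneg_lobe1 n x : (0 < n)%nat -> 0 < x <= PI / (2 * INR n) -> x < PI ->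
  0 <= kernel n x.
Proof.
  intros Hn Hx HxPI. assert (HN : 0 < INR n) by (apply lt_0_INR; lia).
  assert (0 < sin x) by (apply sin_gt_0; lra).
  assert (2 * INR n * x <= PI).
  { replace PI with (2 * INR n * (PI / (2 * INR n))) by (field; lra).
    apply Rmult_le_compat_l; lra. }
  rewrite kernel_eq by lra. apply Rdiv_le_0_compat; auto.
  apply sin_ge_0; [|lra]. apply Rmult_le_pos; lra.
Qed.

Lemma kernel_nonpos_lobe2 n x : (0 < n)%nat -> PI / (2 * INR n) <= x <= PI / INR n -> x < PI ->
  kernel n x <= 0.
Proof.
  intros Hn Hx HxPI. assert (HN : 0 < INR n) by (apply lt_0_INR; lia).
  assert (0 < PI / (2 * INR n)) by (apply Rdiv_lt_0_compat; pose proof PI_RGT_0; lra).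
  assert (0 < sin x) by (apply sin_gt_0; lra).
  assert (PI <= 2 * INR n * x).
  { replace PI with (2 * INR n * (PI / (2 * INR n))) at 1 by (field; lra).
    apply Rmult_le_compat_l; lra. }
  assert (2 * INR n * x <= 2 * PI).
  { replace (2 * PI) with (2 * INR n * (PI / INR n)) by (field; lra).
    apply Rmult_le_compat_l; lra. }
  rewrite kernel_eq by lra. unfold Rdiv. apply Rmult_le_0_r.
  - apply sin_le_0; lra.
  - left; apply Rinv_0_lt_compat; auto.
Qed.

Section KernelShape.
Variable n : nat.
Hypothesis n_ge4 : (4 <= n)%nat.

Lemma lobe_widths : 0 < PI / (2 * INR n) <= PI / INR n /\ PI / INR n <= PI / 4.
Proof.
  pose proof PI_RGT_0.
  assert (4 <= INR n) by (replace 4 with (INR 4) by (simpl; ring); apply le_INR; lia).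
  split; [split|]; [apply Rdiv_lt_0_compat; lra | |];
    unfold Rdiv; apply Rmult_le_compat_l; try lra; apply Rinv_le_contravar; lra.
Qed.

Lemma kernel_int_lobe1 y : 0 <= y <= PI / (2 * INR n) ->
  0 <= kernel_int n y <= kernel_int n (PI / (2 * INR n)).
Proof.
  intros Hy. pose proof PI_RGT_0. pose proof lobe_widths.
  assert (Hsign : forall u v, 0 <= u <= v -> v <= PI / (2 * INR n) -> 0 <= RInt (kernel n) u v).
  { intros u v Huv Hv. apply RInt_nonneg; [lra | apply ex_RInt_kernel|].
    intros x Hx. apply kernel_nonneg_lobe1; [lia | lra | lra]. }
  rewrite (kernel_int_split n y (PI / (2 * INR n))).
  assert (0 <= RInt (kernel n) y (PI / (2 * INR n))) by (apply Hsign; lra).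
  assert (0 <= kernel_int n y) by (apply Hsign; lra). lra.
Qed.

Lemma kernel_int_lobe2 y : PI / (2 * INR n) <= y <= PI / INR n ->
  kernel_int n (PI / INR n) <= kernel_int n y <= kernel_int n (PI / (2 * INR n)).
Proof.
  intros Hy. pose proof PI_RGT_0. pose proof lobe_widths.
  assert (Hsign : forall u v, PI / (2 * INR n) <= u <= v -> v <= PI / INR n ->
                   RInt (kernel n) u v <= 0).
  { intros u v Huv Hv. apply RInt_nonpos; [lra | apply ex_RInt_kernel|].
    intros x Hx. apply kernel_nonpos_lobe2; [lia | lra | lra]. }
  rewrite (kernel_int_split n y (PI / INR n)), (kernel_int_split n (PI / (2 * INR n)) y).
  assert (RInt (kernel n) y (PI / INR n) <= 0) by (apply Hsign; lra).
  assert (RInt (kernel n) (PI / (2 * INR n)) y <= 0) by (apply Hsign; lra). lra.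
Qed.

Lemma kernel_int_tail y : PI / INR n <= y <= PI / 2 ->
  kernel_int n (PI / INR n) <= kernel_int n y
  <= kernel_int n (PI / INR n) + / INR n * / sin (PI / INR n).
Proof.
  intros Hy. pose proof PI_RGT_0. pose proof lobe_widths.
  assert (Hnode : cos (2 * INR n * (PI / INR n)) = 1).
  { replace (2 * INR n * (PI / INR n)) with (0 + 2 * INR 1 * PI)
      by (simpl; field; apply not_0_INR; lia).
    now rewrite cos_period, cos_0. }
  destruct (RInt_kernel_tail n (PI / INR n) y) as [L U]; try lia; try lra.
  rewrite (kernel_int_split n (PI / INR n) y). lra.
Qed.

End KernelShape.

(** * Numerical bounds on the primitive of the kernel *)

Lemma sin_le_taylor5 u : 0 <= u <= PI -> sin u <= u - u ^ 3 / 6 + u ^ 5 / 120.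
Proof.
  intros. destruct (sin_bound u 0) as [_ H1]; try lra.
  unfold sin_approx, sin_term in H1. replace (2 * (0 + 1))%nat with 2%nat in H1 by reflexivity.
  cbn [sum_f_R0] in H1; rewrite !INR_IZR_INZ in H1.
  cbn -[IZR sin Rmult Rplus Rdiv Ropp Rinv pow Rminus] in H1. lra.
Qed.

Lemma sin_ge_taylor7 u : 0 <= u <= PI -> u - u ^ 3 / 6 + u ^ 5 / 120 - u ^ 7 / 5040 <= sin u.
Proof.
  intros. destruct (sin_bound u 1) as [H1 _]; try lra.
  unfold sin_approx, sin_term in H1. replace (2 * 1 + 1)%nat with 3%nat in H1 by reflexivity.
  cbn [sum_f_R0] in H1; rewrite !INR_IZR_INZ in H1.
  cbn -[IZR sin Rmult Rplus Rdiv Ropp Rinv pow Rminus] in H1. lra.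
Qed.

Lemma sin_ge_taylor3 u : 0 <= u <= PI -> u - u ^ 3 / 6 <= sin u.
Proof.
  intros. destruct (sin_bound u 0) as [H1 _]; try lra.
  unfold sin_approx, sin_term in H1. replace (2 * 0 + 1)%nat with 1%nat in H1 by reflexivity.
  cbn [sum_f_R0] in H1; rewrite !INR_IZR_INZ in H1.
  cbn -[IZR sin Rmult Rplus Rdiv Ropp Rinv pow Rminus] in H1. lra.
Qed.

Lemma inv_sin_le y : 0 < y <= 1 -> / sin y <= / y + y / 3.
Proof.
  intros Hy. pose proof PI_bounds. pose proof (sin_ge_taylor3 y ltac:(lra)).
  assert (Hs : 0 < sin y) by nra.
  apply Rmult_le_reg_l with (sin y); auto. rewrite Rinv_r by lra.
  replace (sin y * (/ y + y / 3)) with (sin y / y + sin y * y / 3) by (field; lra).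
  assert (sin y / y >= 1 - y ^ 2 / 6).
  { apply Rle_ge, (Rmult_le_reg_r y); [lra|].
    unfold Rdiv. rewrite Rmult_assoc, Rinv_l, Rmult_1_r by lra. nra. }
  assert (0 <= (sin y - (y - y ^ 3 / 6)) * y) by (apply Rmult_le_pos; lra).
  assert (0 <= y ^ 2 * (3 - y ^ 2)) by (apply Rmult_le_pos; nra).
  unfold Rdiv in *. nra.
Qed.

(* Taylor polynomials bounding [sin u / u] on [0, PI], and their primitives vanishing at 0. *)
Definition sinc_ub (u : R) := 1 - u ^ 2 / 6 + u ^ 4 / 120.
Definition sinc_lb (u : R) := 1 - u ^ 2 / 6 + u ^ 4 / 120 - u ^ 6 / 5040.
Definition Si_ub (u : R) := u - u ^ 3 / 18 + u ^ 5 / 600.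
Definition Si_lb (u : R) := u - u ^ 3 / 18 + u ^ 5 / 600 - u ^ 7 / 35280.

Section KernelNumerics.
Variable n : nat.
Hypothesis n_ge100 : (100 <= n)%nat.
Let N := INR n.
Let d := PI / (2 * N).

Lemma N_ge100 : 100 <= N.
Proof.
  unfold N. replace 100 with (INR 100) by (rewrite INR_IZR_INZ; reflexivity). apply le_INR; lia.
Qed.

Lemma half_lobe_bounds : 0 < d <= 0.016.
Proof.
  pose proof N_ge100. pose proof PI_bounds. unfold d. split; [apply Rdiv_lt_0_compat; lra|].
  apply Rmult_le_reg_l with (2 * N); [lra|].
  replace (2 * N * (PI / (2 * N))) with PI by (field; lra). lra.
Qed.

Lemma half_lobe_eq : 2 * N * d = PI.
Proof. pose proof N_ge100. unfold d. field. lra. Qed.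

Lemma kernel_le_sinc_ub x : 0 < x <= d -> kernel n x <= 2 * N * sinc_ub (2 * N * x) + d / 3.
Proof.
  intros Hx. pose proof N_ge100. pose proof half_lobe_bounds. pose proof half_lobe_eq as Hde.
  pose proof PI_bounds.
  set (u := 2 * N * x).
  assert (Hu : 0 < u <= PI) by (unfold u; nra).
  assert (Hsx : 0 < sin x) by (apply sin_gt_0; lra).
  rewrite kernel_eq by lra. fold N u.
  pose proof (inv_sin_le x ltac:(lra)) as I1.
  pose proof (sin_le_taylor5 u ltac:(lra)) as S1.
  assert (S0 : 0 <= sin u) by (apply sin_ge_0; lra). pose proof (SIN_bound u).
  assert (E : u - u ^ 3 / 6 + u ^ 5 / 120 = x * (2 * N * sinc_ub u)) by (unfold sinc_ub, u; field).
  unfold Rdiv. apply Rle_trans with (sin u * (/ x + x / 3)); [apply Rmult_le_compat_l; auto|].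
  assert (sin u * / x <= 2 * N * sinc_ub u).
  { apply Rmult_le_reg_r with x; [lra|]. rewrite Rmult_assoc, Rinv_l by lra. nra. }
  assert (sin u * (x / 3) <= d / 3) by (unfold Rdiv; nra).
  nra.
Qed.

Lemma kernel_shift_half_lobe x : sin (x + d) <> 0 ->
  kernel n (x + d) = - sin (2 * N * x) / sin (x + d).
Proof.
  intros Z. rewrite kernel_eq by auto. fold N.
  replace (2 * N * (x + d)) with (2 * N * x + PI) by (rewrite <- half_lobe_eq; ring).
  now rewrite neg_sin.
Qed.

Lemma kernel_pair_ge x : 0 < x < d ->
  2 * N * sinc_lb (2 * N * x) - 2 * N * sin (2 * N * x) * (/ PI - (2 * N * x) / (2 * PI ^ 2))
  - 2 * d / 3 <= kernel n x + kernel n (x + d).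
Proof.
  intros Hx. pose proof N_ge100. pose proof half_lobe_bounds. pose proof half_lobe_eq as Hde.
  pose proof PI_bounds.
  set (u := 2 * N * x).
  assert (Hu : 0 < u < PI) by (unfold u; nra).
  assert (Hsx : 0 < sin x) by (apply sin_gt_0; lra).
  assert (Hsxd : 0 < sin (x + d)) by (apply sin_gt_0; lra).
  rewrite kernel_shift_half_lobe by lra. rewrite kernel_eq by lra. fold N u.
  pose proof (inv_sin_le (x + d) ltac:(lra)) as I1.
  pose proof (sin_ge_taylor7 u ltac:(lra)) as S1.
  assert (S0 : 0 <= sin u) by (apply sin_ge_0; lra). pose proof (SIN_bound u).
  pose proof (sin_lt_x x ltac:(lra)) as Sx.
  assert (E : u - u ^ 3 / 6 + u ^ 5 / 120 - u ^ 7 / 5040 = x * (2 * N * sinc_lb u))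
    by (unfold sinc_lb, u; field).
  assert (T1 : 2 * N * sinc_lb u <= sin u / sin x).
  { apply Rle_trans with (sin u / x).
    - apply (Rmult_le_reg_r x); [lra|]. replace (sin u / x * x) with (sin u) by (field; lra). nra.
    - unfold Rdiv. apply Rmult_le_compat_l; auto. apply Rinv_le_contravar; lra. }
  (* [1/t] lies below its chord on [d, 2d], which becomes linear in [u]. *)
  assert (C1 : / (x + d) <= 2 * N * (/ PI - u / (2 * PI ^ 2))).
  { assert (Exd : x + d = (u + PI) / (2 * N)) by (unfold u; rewrite <- half_lobe_eq; field; lra).
    rewrite Exd, Rinv_div. unfold Rdiv at 1. apply Rmult_le_compat_l; [lra|].
    apply (Rmult_le_reg_r (u + PI)); [lra|]. rewrite Rinv_l by lra.
    replace ((/ PI - u / (2 * PI ^ 2)) * (u + PI)) with (1 + u * (PI - u) / (2 * PI ^ 2))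
      by (field; lra).
    assert (0 <= u * (PI - u) / (2 * PI ^ 2)).
    { apply Rmult_le_pos; [nra | left; apply Rinv_0_lt_compat; nra]. }
    lra. }
  assert (T2 : - sin u * / (x + d) - 2 * d / 3 <= - sin u / sin (x + d)).
  { unfold Rdiv. rewrite Ropp_mult_distr_l_reverse.
    assert (sin u * / sin (x + d) <= sin u * (/ (x + d) + (x + d) / 3))
      by (apply Rmult_le_compat_l; auto).
    assert (sin u * ((x + d) / 3) <= 2 * d / 3) by (unfold Rdiv; nra).
    nra. }
  assert (sin u * / (x + d) <= sin u * (2 * N * (/ PI - u / (2 * PI ^ 2))))
    by (apply Rmult_le_compat_l; auto).
  nra.
Qed.

Lemma kernel_pair_le x : 0 < x < d ->
  kernel n x + kernel n (x + d) <= 2 * N * sinc_ub (2 * N * x) + d / 3 - sin (2 * N * x) / (2 * d).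
Proof.
  intros Hx. pose proof N_ge100. pose proof half_lobe_bounds. pose proof half_lobe_eq as Hde.
  pose proof PI_bounds. pose proof (kernel_le_sinc_ub x ltac:(lra)).
  set (u := 2 * N * x) in *.
  assert (Hu : 0 < u < PI) by (unfold u; nra).
  assert (Hsxd : 0 < sin (x + d)) by (apply sin_gt_0; lra).
  rewrite kernel_shift_half_lobe by lra. fold N u.
  assert (S0 : 0 <= sin u) by (apply sin_ge_0; lra).
  pose proof (sin_lt_x (x + d) ltac:(lra)) as Sx.
  assert (sin u / (2 * d) <= sin u / sin (x + d)).
  { unfold Rdiv. apply Rmult_le_compat_l; auto. apply Rinv_le_contravar; lra. }
  unfold Rdiv in *. rewrite Ropp_mult_distr_l_reverse. lra.
Qed.

Lemma kernel_int_half_lobe_le : kernel_int n d <= Si_ub PI + d ^ 2 / 3.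
Proof.
  pose proof N_ge100. pose proof half_lobe_bounds. pose proof half_lobe_eq as Hde.
  destruct (RInt_antiderivative (fun x => Si_ub (2 * N * x) + d * x / 3)
              (fun x => 2 * N * sinc_ub (2 * N * x) + d / 3) 0 d) as [E1 E2].
  - lra.
  - intros x _. unfold Si_ub, sinc_ub. auto_derive; auto. field.
  - intros x _. apply continuous_of_ex_derive. unfold sinc_ub. auto_derive. auto.
  - unfold kernel_int. apply Rle_trans with (RInt (fun x => 2 * N * sinc_ub (2 * N * x) + d / 3) 0 d).
    + apply RInt_le; [lra | apply ex_RInt_kernel | exact E2|].
      intros x Hx. apply kernel_le_sinc_ub. lra.
    + rewrite E1, Hde. replace (2 * N * 0) with 0 by ring. unfold Si_ub. right. field.
Qed.

Lemma kernel_int_lobe_pair :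
  kernel_int n (PI / N) = RInt (fun x => kernel n x + kernel n (x + d)) 0 d.
Proof.
  pose proof N_ge100.
  replace (PI / N) with (d + d) by (unfold d; field; lra).
  rewrite (kernel_int_split n d (d + d)), RInt_plusR.
  - unfold kernel_int. rewrite RInt_shift; [|apply ex_RInt_kernel]. now rewrite Rplus_0_l.
  - apply ex_RInt_kernel.
  - apply ex_RInt_shift, ex_RInt_kernel.
Qed.

Lemma kernel_int_lobe_ge : Si_lb PI - 3 / (2 * PI) - 2 * d ^ 2 / 3 <= kernel_int n (PI / N).
Proof.
  pose proof N_ge100. pose proof half_lobe_bounds. pose proof half_lobe_eq as Hde. pose proof PI_bounds.
  rewrite kernel_int_lobe_pair.
  set (lower := fun x => 2 * N * sinc_lb (2 * N * x)
                  - 2 * N * sin (2 * N * x) * (/ PI - (2 * N * x) / (2 * PI ^ 2)) - 2 * d / 3).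
  destruct (RInt_antiderivative
              (fun x => Si_lb (2 * N * x)
                 - (- cos (2 * N * x) / PI
                    - (sin (2 * N * x) - 2 * N * x * cos (2 * N * x)) / (2 * PI ^ 2))
                 - 2 * d * x / 3) lower 0 d) as [E1 E2].
  - lra.
  - intros x _. unfold lower, Si_lb, sinc_lb. auto_derive; [repeat split; lra|]. field. lra.
  - intros x _. apply continuous_of_ex_derive. unfold lower, sinc_lb. auto_derive. repeat split; lra.
  - apply Rle_trans with (RInt lower 0 d).
    + rewrite E1, Hde. replace (2 * N * 0) with 0 by ring. unfold Si_lb.
      rewrite cos_PI, sin_PI, cos_0, sin_0. right. field. lra.
    + apply RInt_le; [lra | exact E2 | |].
      * apply (ex_RInt_plus (kernel n)); [apply ex_RInt_kernel | apply ex_RInt_shift, ex_RInt_kernel].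
      * intros x Hx. apply kernel_pair_ge. lra.
Qed.

Lemma kernel_int_lobe_le : kernel_int n (PI / N) <= Si_ub PI + d ^ 2 / 3 - / PI.
Proof.
  pose proof N_ge100. pose proof half_lobe_bounds. pose proof half_lobe_eq as Hde. pose proof PI_bounds.
  rewrite kernel_int_lobe_pair.
  set (upper := fun x => 2 * N * sinc_ub (2 * N * x) + d / 3 - sin (2 * N * x) / (2 * d)).
  destruct (RInt_antiderivative
              (fun x => Si_ub (2 * N * x) + d * x / 3 + cos (2 * N * x) / (4 * N * d)) upper 0 d)
    as [E1 E2].
  - lra.
  - intros x _. unfold upper, Si_ub, sinc_ub. auto_derive; [repeat split; lra|]. field. lra.
  - intros x _. apply continuous_of_ex_derive. unfold upper, sinc_ub. auto_derive. repeat split; lra.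
  - apply Rle_trans with (RInt upper 0 d).
    + apply RInt_le; [lra | | exact E2 |].
      * apply (ex_RInt_plus (kernel n)); [apply ex_RInt_kernel | apply ex_RInt_shift, ex_RInt_kernel].
      * intros x Hx. apply kernel_pair_le. lra.
    + rewrite E1, Hde. replace (2 * N * 0) with 0 by ring. unfold Si_ub.
      rewrite cos_PI, cos_0. replace (4 * N * d) with (2 * PI) by lra. right. field. lra.
Qed.

End KernelNumerics.

Lemma Si_ub_PI : Si_ub PI <= 1.93.
Proof.
  pose proof PI_bounds. unfold Si_ub.
  assert (PI ^ 3 >= 3.1415 ^ 3) by (apply Rle_ge, pow_incr; lra).
  assert (PI ^ 5 <= 3.1416 ^ 5) by (apply pow_incr; lra).
  lra.
Qed.

Lemma Si_lb_PI : 1.843 <= Si_lb PI.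
Proof.
  pose proof PI_bounds. unfold Si_lb.
  assert (PI ^ 3 <= 3.1416 ^ 3) by (apply pow_incr; lra).
  assert (PI ^ 5 >= 3.1415 ^ 5) by (apply Rle_ge, pow_incr; lra).
  assert (PI ^ 7 <= 3.1416 ^ 7) by (apply pow_incr; lra).
  lra.
Qed.

Section KernelBounds.
Variable n : nat.
Hypothesis n_ge100 : (100 <= n)%nat.

Lemma half_lobe_sq_le : (PI / (2 * INR n)) ^ 2 <= 0.0003.
Proof. pose proof (half_lobe_bounds n n_ge100). nra. Qed.

Lemma PI_div_3N2_le : PI / (3 * INR n ^ 2) <= 0.0002.
Proof.
  pose proof PI_bounds. pose proof (N_ge100 n n_ge100). assert (10000 <= INR n ^ 2) by nra.
  apply Rmult_le_reg_l with (3 * INR n ^ 2); [nra|].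
  replace (3 * INR n ^ 2 * (PI / (3 * INR n ^ 2))) with PI by (field; nra). nra.
Qed.

Lemma inv_mul_sin_le : / INR n * / sin (PI / INR n) <= / PI + PI / (3 * INR n ^ 2).
Proof.
  pose proof PI_bounds. pose proof (N_ge100 n n_ge100).
  assert (0 < PI / INR n <= 1).
  { split; [apply Rdiv_lt_0_compat; lra|].
    apply Rmult_le_reg_l with (INR n); [lra|].
    replace (INR n * (PI / INR n)) with PI by (field; lra). lra. }
  apply Rle_trans with (/ INR n * (/ (PI / INR n) + PI / INR n / 3)).
  - apply Rmult_le_compat_l; [left; apply Rinv_0_lt_compat; lra|]. now apply inv_sin_le.
  - right. field. lra.
Qed.

Lemma inv_mul_sin_le_num : / INR n * / sin (PI / INR n) <= 0.32.
Proof.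
  pose proof inv_PI_bounds. pose proof inv_mul_sin_le.
  pose proof PI_div_3N2_le.
  lra.
Qed.

Lemma kernel_int_lobe_ge_num : 1.3653 <= kernel_int n (PI / INR n).
Proof.
  pose proof PI_bounds. pose proof Si_lb_PI. pose proof half_lobe_sq_le.
  pose proof (kernel_int_lobe_ge n n_ge100) as Hge.
  pose proof inv_PI_bounds.
  replace (3 / (2 * PI)) with (3 / 2 * / PI) in Hge by (field; lra). lra.
Qed.

Lemma kernel_int_le_num y : PI / INR n <= y <= PI / 2 -> kernel_int n y <= 1.931.
Proof.
  intros Hy. pose proof PI_bounds. pose proof Si_ub_PI. pose proof half_lobe_sq_le.
  pose proof (kernel_int_lobe_le n n_ge100). pose proof inv_mul_sin_le.
  pose proof (kernel_int_tail n ltac:(lia) y Hy).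
  pose proof PI_div_3N2_le.
  lra.
Qed.

Lemma kernel_int_ge y : PI / (2 * INR n) <= y <= PI / 2 -> 1.36 <= kernel_int n y.
Proof.
  intros Hy. pose proof PI_bounds. pose proof (N_ge100 n n_ge100). pose proof kernel_int_lobe_ge_num.
  assert (PI / INR n <= PI / 2).
  { unfold Rdiv. apply Rmult_le_compat_l; [lra|]. apply Rinv_le_contravar; lra. }
  destruct (Rle_dec y (PI / INR n)).
  - pose proof (kernel_int_lobe2 n ltac:(lia) y ltac:(lra)). lra.
  - pose proof (kernel_int_tail n ltac:(lia) y ltac:(lra)). lra.
Qed.

Lemma kernel_int_bounds y : 0 <= y <= PI / 2 -> 0 <= kernel_int n y <= 1.94.
Proof.
  intros Hy. pose proof PI_bounds. pose proof (N_ge100 n n_ge100). pose proof Si_ub_PI.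
  pose proof half_lobe_sq_le. pose proof (kernel_int_half_lobe_le n n_ge100).
  destruct (Rle_dec y (PI / (2 * INR n))).
  - pose proof (kernel_int_lobe1 n ltac:(lia) y ltac:(lra)). lra.
  - pose proof (kernel_int_ge y ltac:(lra)).
    assert (PI / (2 * INR n) <= PI / INR n).
    { unfold Rdiv. apply Rmult_le_compat_l; [lra|]. apply Rinv_le_contravar; lra. }
    destruct (Rle_dec y (PI / INR n)).
    + pose proof (kernel_int_lobe2 n ltac:(lia) y ltac:(lra)). lra.
    + pose proof (kernel_int_le_num y ltac:(lra)). lra.
Qed.

End KernelBounds.

(** * Sums of kernel integrals over separated intervals *)

Section LobeSum.
Variables (n m : nat) (alpha A B : nat -> R) (R0 : R).
Hypothesis n_ge100 : (100 <= n)%nat.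
Hypothesis R0_mid : PI / 4 <= R0 <= 3 * PI / 4.
Hypothesis alpha_unit : forall i, (i < m)%nat -> Rabs (alpha i) = 1.
Hypothesis lobe_window : forall i, (i < m)%nat -> A i <= B i -> R0 - PI < A i /\ B i < R0.
Hypothesis lobe_length : forall i, (i < m)%nat -> A i <= B i ->
  PI / INR n <= B i - A i <= 6 * (PI / INR n).
Hypothesis lobe_nodes : forall i, (i < m)%nat -> A i <= B i ->
  cos (2 * INR n * A i) = cos (2 * INR n * B i).
Hypothesis lobe_separated : forall i j x y, (i < m)%nat -> (j < m)%nat -> i <> j ->
  A i <= x <= B i -> A j <= y <= B j -> PI / INR n <= Rabs (x - y).

Definition lobe i := ind (A i <= B i) * RInt (kernel n) (A i) (B i).
Definition lobe_sum := rsum (fun i => alpha i * lobe i) m.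

Definition far_right i := A i <= B i /\ PI / INR n <= A i.
Definition far_left i := A i <= B i /\ B i <= - (PI / INR n).
Definition near i := A i <= B i /\ - (PI / INR n) < B i /\ A i < PI / INR n.
Definition covers_zero i := A i <= 0 <= B i.
Definition near_right i := A i <= B i /\ 0 < A i < PI / INR n.
Definition near_left i := A i <= B i /\ - (PI / INR n) < B i < 0.

Let lobe_width : 0 < PI / INR n /\ 7 * (PI / INR n) <= PI / 2.
Proof.
  pose proof (N_ge100 n n_ge100). pose proof PI_bounds. split; [apply Rdiv_lt_0_compat; lra|].
  apply Rmult_le_reg_r with (INR n); [lra|].
  replace (7 * (PI / INR n) * INR n) with (7 * PI) by (field; lra). nra.
Qed.

Lemma lobe_active i : A i <= B i -> lobe i = RInt (kernel n) (A i) (B i).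
Proof. intros H. unfold lobe. rewrite ind_true by exact H. ring. Qed.

Lemma lobe_unique i j x y : (i < m)%nat -> (j < m)%nat ->
  A i <= x <= B i -> A j <= y <= B j -> Rabs (x - y) < PI / INR n -> i = j.
Proof.
  intros Hi Hj Hx Hy Hxy. destruct (Nat.eq_dec i j) as [|Hne]; auto.
  pose proof (lobe_separated i j x y Hi Hj Hne Hx Hy). lra.
Qed.

Lemma lobe_split i :
  lobe i = ind (far_right i) * lobe i + ind (far_left i) * lobe i + ind (near i) * lobe i.
Proof.
  destruct lobe_width as [Hh _]. unfold far_right, far_left, near.
  destruct (Rle_dec (A i) (B i)) as [Hab|Hab].
  - destruct (Rle_dec (PI / INR n) (A i)).
    + rewrite (ind_true (_ /\ PI / INR n <= A i)), !ind_false by lra. ring.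
    + destruct (Rle_dec (B i) (- (PI / INR n))).
      * rewrite (ind_true (_ /\ B i <= _)), !ind_false by lra. ring.
      * rewrite (ind_true (_ /\ - _ < B i /\ _)), !ind_false by lra. ring.
  - unfold lobe. rewrite ind_false by exact Hab. ring.
Qed.

Lemma far_sum_abs_le (Q : nat -> Prop) u v : u <= v -> (forall x, u <= x <= v -> sin x <> 0) ->
  (forall i, (i < m)%nat -> Q i -> u <= A i /\ A i <= B i /\ B i <= v) ->
  Rabs (rsum (fun i => alpha i * (ind (Q i) * lobe i)) m)
  <= / INR n * RInt (fun x => / sin x ^ 2) u v.
Proof.
  intros Huv Hs HQ. pose proof (N_ge100 n n_ge100).
  eapply Rle_trans; [apply rsum_abs|].
  apply Rle_trans
    with (rsum (fun i => / INR n * (ind (Q i) * RInt (fun x => / sin x ^ 2) (A i) (B i))) m).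
  - apply rsum_le. intros i Hi. destruct (classic (Q i)) as [Qi|Qi].
    + destruct (HQ i Hi Qi) as (H1 & H2 & H3).
      rewrite ind_true, !Rmult_1_l, Rabs_mult, alpha_unit, Rmult_1_l, lobe_active by auto.
      apply abs_RInt_kernel_le; auto; [lia | intros; apply Hs; lra].
    + rewrite ind_false, !Rmult_0_l, Rmult_0_r, Rabs_R0 by exact Qi. lra.
  - rewrite rsum_scal. apply Rmult_le_compat_l; [left; apply Rinv_0_lt_compat; lra|].
    apply rsum_RInt_disjoint_le; auto.
    + intros x Hx. assert (0 < sin x ^ 2) by (apply pow2_gt_0, Hs; auto).
      left; apply Rinv_0_lt_compat; lra.
    + intros x Hx. specialize (Hs x Hx). apply continuous_of_ex_derive. auto_derive.
      repeat split; auto using pow_nonzero.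
    + intros i j x Hi Hj Hne _ _ Hx Hy. pose proof (lobe_separated i j x x Hi Hj Hne Hx Hy) as Hxx.
      rewrite Rminus_diag, Rabs_R0 in Hxx. lra.
Qed.

Lemma far_sum_le :
  Rabs (rsum (fun i => alpha i * (ind (far_right i) * lobe i)) m)
  + Rabs (rsum (fun i => alpha i * (ind (far_left i) * lobe i)) m) <= 0.64.
Proof.
  destruct lobe_width as [Hh H7]. pose proof PI_bounds.
  assert (Hright : forall x, PI / INR n <= x <= R0 -> 0 < sin x) by (intros; apply sin_gt_0; lra).
  assert (Hleft : forall x, R0 - PI <= x <= - (PI / INR n) -> sin x < 0)
    by (intros; apply sin_lt_0_var; lra).
  assert (FR : Rabs (rsum (fun i => alpha i * (ind (far_right i) * lobe i)) m)
               <= / INR n * RInt (fun x => / sin x ^ 2) (PI / INR n) R0).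
  { apply far_sum_abs_le; [lra | intros x Hx; specialize (Hright x Hx); lra |].
    intros i Hi [Hab Hf]. pose proof (lobe_window i Hi Hab). repeat split; lra. }
  assert (FL : Rabs (rsum (fun i => alpha i * (ind (far_left i) * lobe i)) m)
               <= / INR n * RInt (fun x => / sin x ^ 2) (R0 - PI) (- (PI / INR n))).
  { apply far_sum_abs_le; [lra | intros x Hx; specialize (Hleft x Hx); lra |].
    intros i Hi [Hab Hf]. pose proof (lobe_window i Hi Hab). repeat split; lra. }
  rewrite RInt_inv_sin_sq in FR, FL;
    [| lra | intros x Hx; specialize (Hleft x Hx); lra
     | lra | intros x Hx; specialize (Hright x Hx); lra].
  set (h := PI / INR n) in *.
  assert (Hs : 0 < sin h) by (apply Hright; lra).
  assert (HsR : 0 < sin R0) by (apply Hright; lra).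
  assert (E1 : cos (R0 - PI) / sin (R0 - PI) = cos R0 / sin R0).
  { rewrite cos_minus, sin_minus, cos_PI, sin_PI. field. lra. }
  assert (E2 : cos (- h) / sin (- h) = - (cos h / sin h)).
  { rewrite cos_neg, sin_neg. field. lra. }
  rewrite E1, E2 in FL.
  assert (cos h / sin h <= / sin h).
  { unfold Rdiv. rewrite <- (Rmult_1_l (/ sin h)) at 2.
    apply Rmult_le_compat_r; [left; apply Rinv_0_lt_compat; lra | apply COS_bound]. }
  assert (0 < / INR n) by (apply Rinv_0_lt_compat; pose proof (N_ge100 n n_ge100); lra).
  pose proof (inv_mul_sin_le_num n n_ge100) as Hnum. fold h in Hnum.
  assert (/ INR n * (cos h / sin h) <= / INR n * / sin h) by (apply Rmult_le_compat_l; lra).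
  assert (/ INR n * (cos h / sin h - cos R0 / sin R0) + / INR n * (cos R0 / sin R0 - - (cos h / sin h))
          = 2 * (/ INR n * (cos h / sin h))) by ring.
  lra.
Qed.

Lemma near_point i : near i -> exists x, A i <= x <= B i /\ Rabs x < PI / INR n.
Proof.
  intros (Hab & HB & HA).
  destruct (Rle_dec (A i) 0); [destruct (Rle_dec 0 (B i))|].
  - exists 0. rewrite Rabs_R0. destruct lobe_width. repeat split; lra.
  - exists (B i). rewrite Rabs_left by lra. repeat split; lra.
  - exists (A i). rewrite Rabs_right by lra. repeat split; lra.
Qed.

Lemma covers_zero_lobe_bounds i : (i < m)%nat -> covers_zero i -> 1.36 <= lobe i <= 3.88.
Proof.
  intros Hi [Ha Hb]. destruct lobe_width as [Hh H7].
  destruct (lobe_length i Hi ltac:(lra)) as [L1 L2].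
  rewrite lobe_active by lra.
  rewrite <- (RInt_ChaslesR (kernel n) (A i) 0 (B i)) by apply ex_RInt_kernel.
  rewrite RInt_kernel_opp, Ropp_0.
  change (1.36 <= kernel_int n (- A i) + kernel_int n (B i) <= 3.88).
  pose proof (kernel_int_bounds n n_ge100 (- A i) ltac:(lra)).
  pose proof (kernel_int_bounds n n_ge100 (B i) ltac:(lra)).
  assert (PI / (2 * INR n) = PI / INR n / 2)
    by (field; pose proof (N_ge100 n n_ge100); lra).
  destruct (Rle_dec (PI / (2 * INR n)) (B i)).
  - pose proof (kernel_int_ge n n_ge100 (B i) ltac:(lra)). lra.
  - pose proof (kernel_int_ge n n_ge100 (- A i) ltac:(lra)). lra.
Qed.

Lemma near_right_lobe_le i : (i < m)%nat -> near_right i -> Rabs (lobe i) <= 1.94.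
Proof.
  intros Hi (Hab & HA & HA'). destruct lobe_width as [Hh H7].
  destruct (lobe_length i Hi Hab) as [L1 L2].
  rewrite lobe_active by lra. pose proof (kernel_int_split n (A i) (B i)).
  pose proof (kernel_int_bounds n n_ge100 (A i) ltac:(lra)).
  pose proof (kernel_int_bounds n n_ge100 (B i) ltac:(lra)).
  apply Rabs_le. lra.
Qed.

Lemma near_left_lobe_le i : (i < m)%nat -> near_left i -> Rabs (lobe i) <= 1.94.
Proof.
  intros Hi (Hab & HB & HB'). destruct lobe_width as [Hh H7].
  destruct (lobe_length i Hi Hab) as [L1 L2].
  rewrite lobe_active, RInt_kernel_opp by lra. pose proof (kernel_int_split n (- B i) (- A i)).
  pose proof (kernel_int_bounds n n_ge100 (- A i) ltac:(lra)).
  pose proof (kernel_int_bounds n n_ge100 (- B i) ltac:(lra)).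
  apply Rabs_le. lra.
Qed.

Lemma near_sum_covers_zero i0 : (i0 < m)%nat -> covers_zero i0 ->
  rsum (fun i => alpha i * (ind (near i) * lobe i)) m = alpha i0 * lobe i0.
Proof.
  intros Hi0 Hzero. destruct lobe_width as [Hh _]. unfold covers_zero in Hzero.
  rewrite (rsum_single _ m i0 Hi0).
  - rewrite ind_true; [ring|]. unfold near. lra.
  - intros i Hi Hne. rewrite ind_false; [ring|]. intros Hnear. apply Hne.
    destruct (near_point i Hnear) as (x & Hx & Hxh).
    apply (lobe_unique i i0 x 0); auto. now rewrite Rminus_0_r.
Qed.

Lemma near_class_sum_le (Q : nat -> Prop) :
  (forall i j, (i < m)%nat -> (j < m)%nat -> Q i -> Q j -> i = j) ->
  (forall i, (i < m)%nat -> Q i -> Rabs (lobe i) <= 1.94) ->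
  Rabs (rsum (fun i => alpha i * (ind (Q i) * lobe i)) m) <= 1.94.
Proof.
  intros Hu Hb. eapply Rle_trans; [apply rsum_abs|].
  apply (rsum_le_of_unique Q); auto; [lra| |].
  - intros i _ Hq. rewrite ind_false, Rmult_0_l, Rmult_0_r by exact Hq. apply Rabs_R0.
  - intros i Hi Hq. rewrite ind_true, Rmult_1_l, Rabs_mult, alpha_unit, Rmult_1_l by auto. auto.
Qed.

Lemma near_sum_le : Rabs (rsum (fun i => alpha i * (ind (near i) * lobe i)) m) <= 3.88.
Proof.
  destruct lobe_width as [Hh _].
  destruct (classic (exists i0, (i0 < m)%nat /\ covers_zero i0)) as [[i0 [Hi0 Hzero]]|Hno].
  - rewrite (near_sum_covers_zero i0), Rabs_mult, alpha_unit, Rmult_1_l by auto.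
    pose proof (covers_zero_lobe_bounds i0 Hi0 Hzero). rewrite Rabs_right; lra.
  - rewrite (rsum_ext _ (fun i => alpha i * (ind (near_right i) * lobe i)
                                  + alpha i * (ind (near_left i) * lobe i))), rsum_plus.
    + eapply Rle_trans; [apply Rabs_triang|].
      assert (Rabs (rsum (fun i => alpha i * (ind (near_right i) * lobe i)) m) <= 1.94).
      { apply near_class_sum_le; [|exact near_right_lobe_le].
        intros i j Hi Hj (Hi1 & Hi2 & Hi3) (Hj1 & Hj2 & Hj3).
        apply (lobe_unique i j (A i) (A j)); auto; [lra | lra | apply Rabs_def1; lra]. }
      assert (Rabs (rsum (fun i => alpha i * (ind (near_left i) * lobe i)) m) <= 1.94).
      { apply near_class_sum_le; [|exact near_left_lobe_le].
        intros i j Hi Hj (Hi1 & Hi2 & Hi3) (Hj1 & Hj2 & Hj3).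
        apply (lobe_unique i j (B i) (B j)); auto; [lra | lra | apply Rabs_def1; lra]. }
      lra.
    + intros i Hi. assert (Hni : ~ covers_zero i) by (intros Ho; apply Hno; now exists i).
      unfold covers_zero, near, near_right, near_left in *.
      destruct (classic (A i <= B i /\ - (PI / INR n) < B i /\ A i < PI / INR n)) as [Hn|Hn].
      * rewrite (ind_true (_ /\ _ /\ _)) by exact Hn.
        destruct (Rle_dec (A i) 0).
        -- rewrite (ind_false (_ /\ 0 < A i < _)), (ind_true (_ /\ _ < B i < 0)) by lra. ring.
        -- rewrite (ind_true (_ /\ 0 < A i < _)), (ind_false (_ /\ _ < B i < 0)) by lra. ring.
      * rewrite !ind_false by lra. ring.
Qed.

Lemma lobe_sum_split : lobe_sum =
  rsum (fun i => alpha i * (ind (far_right i) * lobe i)) m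
  + rsum (fun i => alpha i * (ind (far_left i) * lobe i)) m
  + rsum (fun i => alpha i * (ind (near i) * lobe i)) m.
Proof.
  unfold lobe_sum. rewrite <- !rsum_plus. apply rsum_ext. intros i _.
  rewrite lobe_split at 1. ring.
Qed.

Theorem lobe_sum_abs_le : Rabs lobe_sum <= 4.52.
Proof.
  rewrite lobe_sum_split. pose proof far_sum_le. pose proof near_sum_le.
  eapply Rle_trans; [apply Rabs_triang|].
  pose proof (Rabs_triang (rsum (fun i => alpha i * (ind (far_right i) * lobe i)) m)
                          (rsum (fun i => alpha i * (ind (far_left i) * lobe i)) m)).
  lra.
Qed.

Theorem lobe_sum_abs_ge i0 : (i0 < m)%nat -> covers_zero i0 -> 0.72 <= Rabs lobe_sum.
Proof.
  intros Hi0 Hzero. rewrite lobe_sum_split, (near_sum_covers_zero i0 Hi0 Hzero). pose proof far_sum_le.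
  pose proof (covers_zero_lobe_bounds i0 Hi0 Hzero).
  assert (Rabs (alpha i0 * lobe i0) = lobe i0)
    by (rewrite Rabs_mult, alpha_unit, Rmult_1_l by auto; apply Rabs_right; lra).
  pose proof (Rabs_triang_inv (alpha i0 * lobe i0)
    (- (rsum (fun i => alpha i * (ind (far_right i) * lobe i)) m
        + rsum (fun i => alpha i * (ind (far_left i) * lobe i)) m))) as T.
  rewrite Rabs_Ropp in T.
  pose proof (Rabs_triang (rsum (fun i => alpha i * (ind (far_right i) * lobe i)) m)
                          (rsum (fun i => alpha i * (ind (far_left i) * lobe i)) m)).
  replace (alpha i0 * lobe i0 - - (rsum (fun i => alpha i * (ind (far_right i) * lobe i)) m
        + rsum (fun i => alpha i * (ind (far_left i) * lobe i)) m))
    with (rsum (fun i => alpha i * (ind (far_right i) * lobe i)) m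
          + rsum (fun i => alpha i * (ind (far_left i) * lobe i)) m + alpha i0 * lobe i0) in T by ring.
  lra.
Qed.

End LobeSum.

(** * Arcs and the symmetric colouring *)

Lemma arc_period n a b th (z : Z) : arc n a b (th + 2 * PI * IZR z) <-> arc n a b th.
Proof.
  unfold arc. split; intros [k Hk].
  - exists (z + k)%Z. rewrite plus_IZR.
    replace (th + 2 * PI * (IZR z + IZR k)) with (th + 2 * PI * IZR z + 2 * PI * IZR k) by ring. auto.
  - exists (k - z)%Z. rewrite minus_IZR.
    replace (th + 2 * PI * IZR z + 2 * PI * (IZR k - IZR z)) with (th + 2 * PI * IZR k) by ring. auto.
Qed.

Lemma arc_span_bounds n a b : (0 < n)%nat -> (a < b)%Z -> (b - a < 2 * Z.of_nat n)%Z ->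
  0 < IZR (b - a) * PI / INR n < 2 * PI.
Proof.
  intros Hn Hab Hba. assert (HN : 0 < INR n) by (apply lt_0_INR; lia). pose proof PI_RGT_0.
  assert (1 <= IZR (b - a)) by (apply IZR_le; lia).
  assert (IZR (b - a) < 2 * INR n).
  { rewrite INR_IZR_INZ. replace 2 with (IZR 2) by reflexivity. rewrite <- mult_IZR.
    apply IZR_lt. lia. }
  split; [apply Rdiv_lt_0_compat; nra|].
  apply Rmult_lt_reg_r with (INR n); auto.
  replace (IZR (b - a) * PI / INR n * INR n) with (IZR (b - a) * PI) by (field; lra). nra.
Qed.

Lemma arc_next_copy n a b w : (0 < n)%nat -> (a < b)%Z -> (b - a < 2 * Z.of_nat n)%Z ->
  ~ arc n a b w ->
  exists c, w < c /\ c + IZR (b - a) * PI / INR n < w + 2 * PI /\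
    forall th, w <= th <= w + 2 * PI ->
      (arc n a b th <-> c <= th <= c + IZR (b - a) * PI / INR n).
Proof.
  intros Hn Hab Hba Hw.
  assert (HN : 0 < INR n) by (apply lt_0_INR; lia). pose proof PI_RGT_0.
  set (A := IZR a * PI / INR n). set (L := IZR (b - a) * PI / INR n).
  assert (HB : IZR b * PI / INR n = A + L) by (unfold A, L; rewrite minus_IZR; field; lra).
  pose proof (arc_span_bounds n a b Hn Hab Hba) as HL. fold L in HL.
  (* [c] is the first translate [A + 2 pi k] of the arc's left end beyond [w]. *)
  set (k := up ((w - A) / (2 * PI))).
  destruct (archimed ((w - A) / (2 * PI))) as [Hk1 Hk2]. fold k in Hk1, Hk2.
  assert (Hk1' : w - A < 2 * PI * IZR k).
  { apply Rmult_gt_compat_l with (r := 2 * PI) in Hk1; [|lra].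
    replace (2 * PI * ((w - A) / (2 * PI))) with (w - A) in Hk1 by (field; lra). lra. }
  assert (Hk2' : 2 * PI * IZR k <= w - A + 2 * PI).
  { assert (Hk : IZR k <= (w - A) / (2 * PI) + 1) by lra.
    apply Rmult_le_compat_l with (r := 2 * PI) in Hk; [|lra].
    replace (2 * PI * ((w - A) / (2 * PI) + 1)) with (w - A + 2 * PI) in Hk by (field; lra). lra. }
  set (c := A + 2 * PI * IZR k).
  assert (Hd : c + L < w + 2 * PI).
  { destruct (Rlt_le_dec (c + L) (w + 2 * PI)) as [|Hd]; auto. exfalso. apply Hw.
    exists (1 - k)%Z. rewrite minus_IZR, HB. fold A. unfold c in *. split; nra. }
  exists c. split; [unfold c; lra|]. split; [exact Hd|].
  intros th Hth. split.
  - intros [k' Hk']. rewrite HB in Hk'. fold A in Hk'.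
    destruct (Z.lt_trichotomy (k + k') 0) as [Hm|[Hm|Hm]].
    + exfalso. assert (Hs : IZR (k + k') <= -1) by (apply IZR_le; lia).
      rewrite plus_IZR in Hs. unfold c in *. nra.
    + assert (Hs : IZR k' = - IZR k)
        by (apply (f_equal IZR) in Hm; rewrite plus_IZR in Hm; simpl in Hm; lra).
      rewrite Hs in Hk'. unfold c. lra.
    + exfalso. assert (Hs : 1 <= IZR (k + k')) by (apply IZR_le; lia).
      rewrite plus_IZR in Hs. unfold c in *. nra.
  - intros Hc. exists (- k)%Z. rewrite opp_IZR, HB. fold A. unfold c in Hc. lra.
Qed.

Lemma arc_window n a b w T : (0 < n)%nat -> (a < b)%Z -> (b - a < 2 * Z.of_nat n)%Z ->
  0 < T <= 2 * PI -> ~ arc n a b w -> ~ arc n a b (w + T) ->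
  (forall th, w <= th <= w + T -> ~ arc n a b th) \/
  exists c d, w < c /\ c <= d /\ d < w + T /\ d - c = IZR (b - a) * PI / INR n /\
    forall th, w <= th <= w + T -> (arc n a b th <-> c <= th <= d).
Proof.
  intros Hn Hab Hba HT Hw HwT.
  destruct (arc_next_copy n a b w Hn Hab Hba Hw) as (c & Hc & Hd & Hiff).
  set (d := c + IZR (b - a) * PI / INR n) in *.
  assert (HL : 0 <= IZR (b - a) * PI / INR n).
  { assert (0 < INR n) by (apply lt_0_INR; lia). pose proof PI_RGT_0.
    assert (0 <= IZR (b - a)) by (apply IZR_le; lia).
    apply Rmult_le_pos; [apply Rmult_le_pos; lra | left; apply Rinv_0_lt_compat; lra]. }
  destruct (Rlt_le_dec d (w + T)) as [HdT|HdT].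
  - right. exists c, d. split; [lra|]. split; [unfold d; lra|]. split; [lra|].
    split; [unfold d; ring|]. intros th Hth. apply Hiff. lra.
  - left. intros th Hth Ht. apply Hiff in Ht; [|lra].
    apply HwT, Hiff; lra.
Qed.

Lemma choose_quarter th : exists q : Z, PI / 4 <= th - IZR q * PI / 2 <= 3 * PI / 4.
Proof.
  pose proof PI_RGT_0.
  set (r := (th - PI / 4) / (PI / 2)).
  destruct (archimed r) as [H1 H2].
  exists (up r - 1)%Z. rewrite minus_IZR.
  assert (E : th = r * (PI / 2) + PI / 4) by (unfold r; field; lra).
  rewrite E. simpl (IZR 1). split; nra.
Qed.

Section SymmetricColouring.
Variables (n : nat) (t : Z) (m : nat) (lo hi : nat -> Z) (alpha : nat -> R).
Hypothesis n_pos : (0 < n)%nat.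
Hypothesis Hws : well_separated n t m lo hi.
Hypothesis Hsym : symmetric_colouring n m lo hi alpha.

Notation I := (Ival n lo hi).
Notation g := (g_alpha n m lo hi alpha).

Lemma arc_ends i : (i < m)%nat -> (lo i < hi i)%Z /\ (hi i - lo i < 2 * Z.of_nat n)%Z.
Proof. destruct Hws as [[H _] _]. auto. Qed.

Lemma arcs_disjoint i j th : (i < m)%nat -> (j < m)%nat -> i <> j -> I i th -> I j th -> False.
Proof.
  destruct Hws as [[_ [H _]] _]. intros Hi Hj Hij Ii Ij. exact (H i j Hi Hj Hij th (conj Ii Ij)).
Qed.

Lemma arc_shift_partner i : (i < m)%nat ->
  exists j, (j < m)%nat /\ forall th, I j th <-> I i (th - PI).
Proof. destruct Hws as [[_ [_ [H _]]] _]. auto. Qed.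

Lemma arc_reflect_partner i : (i < m)%nat ->
  exists j, (j < m)%nat /\ forall th, I j th <-> I i (PI - th).
Proof. destruct Hws as [[_ [_ [_ [H _]]]] _]. auto. Qed.

Lemma arc_length_le i : (i < m)%nat -> IZR (hi i - lo i) * PI / INR n <= 6 * PI / INR n.
Proof. destruct Hws as [_ [H _]]. auto. Qed.

Lemma arcs_separated i j x y : (i < m)%nat -> (j < m)%nat -> i <> j -> I i x -> I j y ->
  PI / INR n <= Rabs (x - y).
Proof.
  destruct Hws as [_ [_ [H _]]]. intros. pose proof (H i j H0 H1 H2 x y H3 H4 0%Z) as E.
  now rewrite Rmult_0_r, Rplus_0_r in E.
Qed.

Lemma arc_avoids_quarter i (q : Z) : (i < m)%nat -> ~ I i (IZR q * PI / 2).
Proof.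
  destruct Hws as [_ [_ [_ H]]]. intros Hi Hq. apply (H i Hi _ Hq q).
  rewrite Rminus_diag, Rabs_R0. assert (0 < INR n) by (apply lt_0_INR; lia).
  pose proof PI_RGT_0. apply Rmult_le_pos; [lra | left; apply Rinv_0_lt_compat; auto].
Qed.

Lemma alpha_unit i : (i < m)%nat -> Rabs (alpha i) = 1.
Proof.
  destruct Hsym as [H _]. intros Hi.
  destruct (H i Hi) as [-> | ->]; unfold Rabs; destruct Rcase_abs; lra.
Qed.

Lemma alpha_reflect i j : (i < m)%nat -> (j < m)%nat ->
  (forall th, I j th <-> I i (PI - th)) -> alpha j = alpha i.
Proof. destruct Hsym as [_ [H _]]. auto. Qed.

Lemma alpha_shift i j : (i < m)%nat -> (j < m)%nat ->
  (forall th, I j th <-> I i (th - PI)) -> alpha j = - alpha i.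
Proof. destruct Hsym as [_ [_ H]]. auto. Qed.

Lemma g_on_arc i th : (i < m)%nat -> I i th -> g th = alpha i.
Proof.
  intros Hi H. unfold g_alpha. rewrite (rsum_single _ m i Hi).
  - rewrite ind_true by exact H. ring.
  - intros j Hj Hji. rewrite ind_false; [ring|]. intros Hj'. now apply (arcs_disjoint i j th).
Qed.

Lemma g_off_arcs th : (forall i, (i < m)%nat -> ~ I i th) -> g th = 0.
Proof. intros H. unfold g_alpha. apply rsum_zero. intros i Hi. rewrite ind_false by auto. ring. Qed.

Lemma g_antiperiodic th : g (th + PI) = - g th.
Proof.
  destruct (classic (exists i, (i < m)%nat /\ I i th)) as [[i [Hi H]]|Hno].
  - destruct (arc_shift_partner i Hi) as [j [Hj Ej]].
    assert (Ij : I j (th + PI)) by (apply Ej; now replace (th + PI - PI) with th by ring).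
    rewrite (g_on_arc j _ Hj Ij), (g_on_arc i _ Hi H). now apply alpha_shift.
  - rewrite (g_off_arcs th), g_off_arcs; [ring| |intros i Hi Ii; apply Hno; now exists i].
    intros j Hj Ij. apply Hno. destruct (arc_shift_partner j Hj) as [k [Hk Ek]].
    exists k. split; auto. apply Ek. unfold Ival.
    apply (arc_period n (lo j) (hi j) (th - PI) 1%Z).
    now replace (th - PI + 2 * PI * IZR 1) with (th + PI) by (simpl; ring).
Qed.

Lemma g_reflect th : g (PI - th) = g th.
Proof.
  destruct (classic (exists i, (i < m)%nat /\ I i th)) as [[i [Hi H]]|Hno].
  - destruct (arc_reflect_partner i Hi) as [j [Hj Ej]].
    assert (Ij : I j (PI - th)) by (apply Ej; now replace (PI - (PI - th)) with th by ring).
    rewrite (g_on_arc j _ Hj Ij), (g_on_arc i _ Hi H). now apply alpha_reflect.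
  - rewrite (g_off_arcs th), g_off_arcs; [ring| |intros i Hi Ii; apply Hno; now exists i].
    intros j Hj Ij. apply Hno. destruct (arc_reflect_partner j Hj) as [k [Hk Ek]].
    exists k. split; auto. now apply Ek.
Qed.

Lemma g_odd th : g (- th) = - g th.
Proof. replace (- th) with (PI - (th + PI)) by ring. rewrite g_reflect. apply g_antiperiodic. Qed.

Lemma g_mul_rsum (f : R -> R) x : g x * f x = rsum (fun i => alpha i * (ind (I i x) * f x)) m.
Proof.
  unfold g_alpha. rewrite rsum_mult_r. apply rsum_ext. intros; ring.
Qed.

Lemma ex_RInt_arc_window i (f : R -> R) w T : (i < m)%nat -> 0 < T <= 2 * PI ->
  ~ I i w -> ~ I i (w + T) -> (forall x, continuous f x) ->
  ex_RInt (fun x => ind (I i x) * f x) w (w + T).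
Proof.
  intros Hi HT H1 H2 Hf. destruct (arc_ends i Hi) as [Hlh Hhl].
  destruct (arc_window n (lo i) (hi i) w T n_pos Hlh Hhl HT H1 H2)
    as [E|(c & d & Hc & Hcd & Hd & _ & E)].
  - apply RInt_ind_out; [lra|]. intros x Hx. apply E; lra.
  - apply (RInt_ind_interval _ _ _ _ c d); auto; lra.
Qed.

Lemma ex_RInt_g_mul_quarters (f : R -> R) (q r : Z) : (q < r <= q + 4)%Z ->
  (forall x, continuous f x) -> ex_RInt (fun x => g x * f x) (IZR q * PI / 2) (IZR r * PI / 2).
Proof.
  intros Hqr Hf. pose proof PI_RGT_0.
  assert (E : IZR r * PI / 2 = IZR q * PI / 2 + IZR (r - q) * PI / 2)
    by (rewrite minus_IZR; field).
  assert (1 <= IZR (r - q) <= 4) by (split; apply IZR_le; lia).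
  rewrite E. apply (ex_RInt_extR (fun x => rsum (fun i => alpha i * (ind (I i x) * f x)) m)).
  - intros x _. symmetry. apply g_mul_rsum.
  - apply RInt_rsum. intros i Hi.
    apply (ex_RInt_scal (fun x => ind (I i x) * f x)), ex_RInt_arc_window; auto; [nra| |].
    + apply arc_avoids_quarter; auto.
    + rewrite <- E. apply arc_avoids_quarter; auto.
Qed.

Lemma s_hat_conv th : s_hat n m lo hi alpha th =
  K * sqrt (INR n) *
  RInt (fun phi => g phi * (/ 4 * (kernel n (th - phi) - kernel n (th + phi)))) (- PI) PI.
Proof.
  set (F := fun (l : nat) phi => g phi * (sin (INR (2 * l + 1) * phi) * sin (INR (2 * l + 1) * th))).
  assert (XF : forall c l, ex_RInt (fun phi => g phi * (sin (INR (2 * l + 1) * phi) * c)) (- PI) PI).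
  { intros c l. replace (- PI) with (IZR (-2) * PI / 2) by (simpl; field).
    replace PI with (IZR 2 * PI / 2) at 2 by (simpl; field).
    apply ex_RInt_g_mul_quarters; [lia|]. intros x. apply continuous_of_ex_derive. auto_derive. auto. }
  unfold s_hat, eps_hat.
  rewrite (rsum_ext _ (fun l => K * sqrt (INR n) * RInt (F l) (- PI) PI)).
  - rewrite rsum_scal. f_equal.
    destruct (RInt_rsum F n (- PI) PI) as [_ E]; [intros; apply XF|]. rewrite <- E.
    apply RInt_extR. intros x _. unfold F. rewrite rsum_scal, rsum_sin_mul_sin. reflexivity.
  - intros l _. rewrite Rmult_assoc. f_equal. unfold F.
    rewrite Rmult_comm, <- RInt_scalR.
    + apply RInt_extR. intros; ring.
    + apply (ex_RInt_extR (fun phi => g phi * (sin (INR (2 * l + 1) * phi) * 1))); [intros; ring|].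
      apply XF.
Qed.

Lemma kernel_reflect_continuous th x : continuous (fun phi => kernel n (th - phi)) x.
Proof.
  apply (continuous_comp (fun phi => th - phi) (kernel n)).
  - apply continuous_of_ex_derive. auto_derive. auto.
  - apply kernel_continuous.
Qed.

Lemma s_hat_conv_half th : s_hat n m lo hi alpha th =
  K * sqrt (INR n) * (/ 2 * RInt (fun phi => g phi * kernel n (th - phi)) (- PI) PI).
Proof.
  set (f := fun phi => g phi * kernel n (th - phi)).
  assert (Xm : ex_RInt f (- PI) PI).
  { replace (- PI) with (IZR (-2) * PI / 2) by (simpl; field).
    replace PI with (IZR 2 * PI / 2) at 2 by (simpl; field).
    apply ex_RInt_g_mul_quarters; [lia | apply kernel_reflect_continuous]. }
  assert (Xr : ex_RInt (fun y => f (0 - y)) (- PI) PI).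
  { apply ex_RInt_reflect. rewrite Rminus_0_l, Rminus_0_l, Ropp_involutive. now apply ex_RInt_swap. }
  assert (Hodd : forall y, g y * kernel n (th + y) = -1 * f (0 - y)).
  { intros y. unfold f. rewrite Rminus_0_l, g_odd. replace (th - - y) with (th + y) by ring. ring. }
  assert (Xp : ex_RInt (fun y => g y * kernel n (th + y)) (- PI) PI).
  { apply (ex_RInt_extR (fun y => -1 * f (0 - y))); [intros; symmetry; apply Hodd|].
    now apply (ex_RInt_scal (fun y => f (0 - y))). }
  assert (Eodd : RInt (fun y => g y * kernel n (th + y)) (- PI) PI = - RInt f (- PI) PI).
  { rewrite (RInt_extR _ (fun y => -1 * f (0 - y))) by (intros; apply Hodd).
    rewrite RInt_scalR, RInt_reflect by (auto; rewrite Rminus_0_l, Rminus_0_l, Ropp_involutive;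
                                          now apply ex_RInt_swap).
    rewrite Rminus_0_l, Rminus_0_l, Ropp_involutive. lra. }
  rewrite s_hat_conv. f_equal.
  rewrite (RInt_extR _ (fun phi => / 4 * (f phi - g phi * kernel n (th + phi))))
    by (intros; unfold f; ring).
  rewrite RInt_scalR, RInt_minusR, Eodd by (auto; now apply (ex_RInt_minus f)).
  fold f. lra.
Qed.

Lemma s_hat_window th (q : Z) : s_hat n m lo hi alpha th =
  K * sqrt (INR n) *
  RInt (fun phi => g phi * kernel n (th - phi)) (IZR q * PI / 2) (IZR q * PI / 2 + PI).
Proof.
  set (f := fun phi => g phi * kernel n (th - phi)).
  assert (Hper : forall x, f (x + 2 * (PI / 2)) = f x).
  { intros x. unfold f. replace (x + 2 * (PI / 2)) with (x + PI) by field.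
    pose proof (kernel_antiperiodic n (th - (x + PI))) as E.
    replace (th - (x + PI) + PI) with (th - x) in E by ring.
    rewrite g_antiperiodic, E. ring. }
  assert (Hq : forall r s : Z, (r < s <= r + 4)%Z -> ex_RInt f (IZR r * PI / 2) (IZR s * PI / 2))
    by (intros; apply ex_RInt_g_mul_quarters; [lia | apply kernel_reflect_continuous]).
  assert (Hint : forall r : Z, ex_RInt f (IZR r * (PI / 2)) (IZR r * (PI / 2) + PI / 2)).
  { intros r. replace (IZR r * (PI / 2)) with (IZR r * PI / 2) by field.
    replace (IZR r * PI / 2 + PI / 2) with (IZR (r + 1) * PI / 2) by (rewrite plus_IZR; simpl; field).
    apply Hq. lia. }
  pose proof (RInt_periodic_window f (PI / 2) Hper Hint) as W.
  replace (2 * (PI / 2)) with PI in W by field.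
  rewrite s_hat_conv_half. f_equal. fold f.
  replace (IZR q * PI / 2) with (IZR q * (PI / 2)) by field. rewrite W.
  pose proof (W (-2)%Z) as Wm. replace (IZR (-2) * (PI / 2)) with (- PI) in Wm by (simpl; field).
  replace (- PI + PI) with 0 in Wm by ring.
  rewrite <- (RInt_ChaslesR f (- PI) 0 PI), Wm; [lra| |].
  - replace (- PI) with (IZR (-2) * PI / 2) by (simpl; field).
    replace 0 with (IZR 0 * PI / 2) by (simpl; field). apply Hq. lia.
  - replace 0 with (IZR 0 * PI / 2) by (simpl; field).
    replace PI with (IZR 2 * PI / 2) at 2 by (simpl; field). apply Hq. lia.
Qed.

Lemma arc_avoids_quarter_shift i (q : Z) : (i < m)%nat -> ~ I i (IZR q * PI / 2 + PI).
Proof.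
  intros Hi. replace (IZR q * PI / 2 + PI) with (IZR (q + 2) * PI / 2)
    by (rewrite plus_IZR; simpl; field).
  now apply arc_avoids_quarter.
Qed.

Lemma conv_window_rsum th (q : Z) :
  RInt (fun phi => g phi * kernel n (th - phi)) (IZR q * PI / 2) (IZR q * PI / 2 + PI) =
  rsum (fun i => alpha i * RInt (fun phi => ind (I i phi) * kernel n (th - phi))
                                (IZR q * PI / 2) (IZR q * PI / 2 + PI)) m.
Proof.
  set (p := IZR q * PI / 2). pose proof PI_RGT_0.
  assert (X : forall i, (i < m)%nat ->
                ex_RInt (fun phi => ind (I i phi) * kernel n (th - phi)) p (p + PI)).
  { intros i Hi. apply ex_RInt_arc_window; auto; [lra | | | ].
    - now apply arc_avoids_quarter.
    - now apply arc_avoids_quarter_shift.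
    - apply kernel_reflect_continuous. }
  rewrite (RInt_extR _ (fun x => rsum (fun i => alpha i * (ind (I i x) * kernel n (th - x))) m))
    by (intros; apply (g_mul_rsum (fun y => kernel n (th - y)))).
  destruct (RInt_rsum (fun i x => alpha i * (ind (I i x) * kernel n (th - x))) m p (p + PI))
    as [_ ->].
  - intros i Hi. apply (ex_RInt_scal (fun x => ind (I i x) * kernel n (th - x))), X, Hi.
  - apply rsum_ext. intros i Hi. apply RInt_scalR, X, Hi.
Qed.

(* The translate [th - I i] met with the window [R0 - PI, R0]: empty, encoded by [b < a],
   or the interval [a, b]. *)
Definition arc_lobe th R0 i (a b : R) : Prop :=
  (b < a /\ forall x, R0 - PI <= x <= R0 -> ~ I i (th - x)) \/
  (R0 - PI < a /\ a <= b /\ b < R0 /\ b - a = IZR (hi i - lo i) * PI / INR n /\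
   forall x, R0 - PI <= x <= R0 -> (I i (th - x) <-> a <= x <= b)).

Lemma arc_lobe_exists th (q : Z) i : exists ab : R * R, (i < m)%nat ->
  arc_lobe th (th - IZR q * PI / 2) i (fst ab) (snd ab) /\
  RInt (fun phi => ind (I i phi) * kernel n (th - phi)) (IZR q * PI / 2) (IZR q * PI / 2 + PI)
  = ind (fst ab <= snd ab) * RInt (kernel n) (fst ab) (snd ab).
Proof.
  destruct (lt_dec i m) as [Hi|Hi]; [|exists (0, 0); intros; contradiction].
  set (p := IZR q * PI / 2). pose proof PI_RGT_0.
  pose proof (arc_avoids_quarter_shift i q Hi) as Hend. fold p in Hend.
  destruct (arc_ends i Hi) as [Hlh Hhl].
  destruct (arc_window n (lo i) (hi i) p PI n_pos Hlh Hhl ltac:(lra) (arc_avoids_quarter i q Hi) Hend)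
    as [E|(c & d & Hc & Hcd & Hd & Hlen & E)].
  - exists (1, 0). intros _. simpl. split.
    + left. split; [lra|]. intros x Hx. apply E. lra.
    + rewrite ind_false by lra. rewrite Rmult_0_l. apply RInt_ind_out; [lra|].
      intros x Hx. apply E. lra.
  - exists (th - d, th - c). intros _. simpl. split.
    + right. split; [lra|]. split; [lra|]. split; [lra|]. split; [lra|].
      intros x Hx. unfold Ival. rewrite E by lra. split; intros; lra.
    + rewrite ind_true, Rmult_1_l by lra.
      rewrite (proj2 (RInt_ind_interval (I i) (fun phi => kernel n (th - phi)) p (p + PI) c d
                        ltac:(lra) Hcd ltac:(lra) E (fun x _ => kernel_reflect_continuous th x))).
      apply RInt_reflect, ex_RInt_kernel.
Qed.

Lemma s_hat_lobe_sum th : exists R0 (A B : nat -> R), PI / 4 <= R0 <= 3 * PI / 4 /\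
  (forall i, (i < m)%nat -> arc_lobe th R0 i (A i) (B i)) /\
  s_hat n m lo hi alpha th = K * sqrt (INR n) * lobe_sum n m alpha A B.
Proof.
  destruct (choose_quarter th) as [q Hq].
  set (ab := fun i => proj1_sig (constructive_indefinite_description _ (arc_lobe_exists th q i))).
  assert (Hab : forall i, (i < m)%nat ->
    arc_lobe th (th - IZR q * PI / 2) i (fst (ab i)) (snd (ab i)) /\
    RInt (fun phi => ind (I i phi) * kernel n (th - phi)) (IZR q * PI / 2) (IZR q * PI / 2 + PI)
    = ind (fst (ab i) <= snd (ab i)) * RInt (kernel n) (fst (ab i)) (snd (ab i))).
  { intros i Hi. unfold ab. destruct (constructive_indefinite_description _ _) as [x Hx]. auto. }
  exists (th - IZR q * PI / 2), (fun i => fst (ab i)), (fun i => snd (ab i)).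
  split; [lra|]. split; [intros i Hi; apply Hab, Hi|].
  rewrite (s_hat_window th q), conv_window_rsum. unfold lobe_sum. f_equal.
  apply rsum_ext. intros i Hi. unfold lobe. f_equal. apply Hab, Hi.
Qed.

Lemma arc_lobe_active th R0 i a b : (i < m)%nat -> arc_lobe th R0 i a b -> a <= b ->
  R0 - PI < a /\ b < R0 /\ PI / INR n <= b - a <= 6 * (PI / INR n) /\
  cos (2 * INR n * a) = cos (2 * INR n * b) /\ (forall x, a <= x <= b -> I i (th - x)).
Proof.
  intros Hi [[Hba _]|(H1 & H2 & H3 & Hlen & E)] Hab; [lra|].
  assert (HN : 0 < INR n) by (apply lt_0_INR; lia). pose proof PI_RGT_0.
  destruct (arc_ends i Hi) as [Hlh _]. pose proof (arc_length_le i Hi).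
  assert (1 <= IZR (hi i - lo i)) by (apply IZR_le; lia).
  split; [lra|]. split; [lra|]. split; [split|split].
  - rewrite Hlen. unfold Rdiv. rewrite Rmult_assoc. rewrite <- (Rmult_1_l (PI * / INR n)) at 1.
    apply Rmult_le_compat_r; [|lra]. apply Rmult_le_pos; [lra | left; apply Rinv_0_lt_compat; lra].
  - rewrite Hlen. unfold Rdiv in *. lra.
  - replace (2 * INR n * b) with (2 * INR n * a + 2 * INR (Z.to_nat (hi i - lo i)) * PI).
    + now rewrite cos_period.
    + rewrite (INR_IZR_INZ (Z.to_nat _)), Z2Nat.id by lia.
      replace b with (a + IZR (hi i - lo i) * PI / INR n) by lra. field. lra.
  - intros x Hx. apply E; lra.
Qed.

Theorem s_hat_bounds th : (100 <= n)%nat ->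
  Rabs (s_hat n m lo hi alpha th) <= K * sqrt (INR n) * 4.52 /\
  (forall i, (i < m)%nat -> I i th -> K * sqrt (INR n) * 0.72 <= Rabs (s_hat n m lo hi alpha th)).
Proof.
  intros Hn. destruct (s_hat_lobe_sum th) as (R0 & A & B & HR0 & Hlobe & ->).
  assert (Hact := fun i Hi => arc_lobe_active th R0 i (A i) (B i) Hi (Hlobe i Hi)).
  assert (Hwin : forall i, (i < m)%nat -> A i <= B i -> R0 - PI < A i /\ B i < R0)
    by (intros i Hi Hab; destruct (Hact i Hi Hab) as (? & ? & _); auto).
  assert (Hlen : forall i, (i < m)%nat -> A i <= B i -> PI / INR n <= B i - A i <= 6 * (PI / INR n))
    by (intros i Hi Hab; destruct (Hact i Hi Hab) as (_ & _ & ? & _); auto).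
  assert (Hnodes : forall i, (i < m)%nat -> A i <= B i ->
                    cos (2 * INR n * A i) = cos (2 * INR n * B i))
    by (intros i Hi Hab; destruct (Hact i Hi Hab) as (_ & _ & _ & ? & _); auto).
  assert (Hsep : forall i j x y, (i < m)%nat -> (j < m)%nat -> i <> j ->
            A i <= x <= B i -> A j <= y <= B j -> PI / INR n <= Rabs (x - y)).
  { intros i j x y Hi Hj Hij Hx Hy.
    destruct (Hact i Hi ltac:(lra)) as (_ & _ & _ & _ & Ii).
    destruct (Hact j Hj ltac:(lra)) as (_ & _ & _ & _ & Ij).
    rewrite Rabs_minus_sym. replace (y - x) with ((th - x) - (th - y)) by ring.
    apply (arcs_separated i j); auto. }
  assert (HK : 0 < K * sqrt (INR n)).
  { apply Rmult_lt_0_compat; [unfold K; apply pow_lt; lra|].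
    apply sqrt_lt_R0, lt_0_INR. lia. }
  rewrite Rabs_mult, (Rabs_pos_eq (K * sqrt (INR n))) by lra.
  split.
  - apply Rmult_le_compat_l; [lra|]. eapply lobe_sum_abs_le; eauto using alpha_unit.
  - intros i Hi Hth. apply Rmult_le_compat_l; [lra|].
    eapply (lobe_sum_abs_ge n m alpha A B R0); eauto using alpha_unit.
    unfold covers_zero. destruct (Hlobe i Hi) as [[_ E]|(_ & _ & _ & _ & E)].
    + exfalso. apply (E 0); [lra|]. now rewrite Rminus_0_r.
    + apply E; [lra|]. now rewrite Rminus_0_r.
Qed.

End SymmetricColouring.

Theorem lemma5p6 :
  exists n0 : nat, forall n : nat, (n0 <= n)%nat -> (0 < n)%nat ->
  forall t : Z, Z.odd t = true ->
    powerRZ 2 (-43) < gamma n t -> gamma n t <= powerRZ 2 (-40) ->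
  forall (m : nat) (lo hi : nat -> Z) (alpha : nat -> R),
    well_separated n t m lo hi ->
    symmetric_colouring n m lo hi alpha ->
    (forall l, (l < n)%nat -> Rabs (eps_hat n m lo hi alpha (2 * l + 1)) <= 1) ->
    (forall i th, (i < m)%nat -> Ival n lo hi i th ->
       2 * K * sqrt (INR n) / 3 <= Rabs (s_hat n m lo hi alpha th)) /\
    (forall th, Rabs (s_hat n m lo hi alpha th) <= 5 * K * sqrt (INR n)).
Proof.
  exists 100%nat. intros n Hn Hpos t _ _ _ m lo hi alpha Hws Hsym _.
  assert (HK : 0 < K * sqrt (INR n)).
  { apply Rmult_lt_0_compat; [unfold K; apply pow_lt; lra|]. apply sqrt_lt_R0, lt_0_INR. lia. }
  pose proof (fun th => s_hat_bounds n t m lo hi alpha Hpos Hws Hsym th Hn) as Hb.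
  split.
  - intros i th Hi Hth. destruct (Hb th) as [_ L]. specialize (L i Hi Hth). lra.
  - intros th. destruct (Hb th) as [U _]. lra.
Qed.
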